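(* Let $X$ be an FK-space containing $\phi$. Then $X$ has $F\sigma_p^q[K]$ if and only if $\overline{\phi}$ (the closure of $\phi$ in $X$) has $\sigma_p^q[K]$ and $X\subseteq(\overline{\phi})^{dd}$.
   Context: An FK-space is a vector subspace of the space $w$ of all complex sequences with a complete metrizable locally convex topology in which coordinate functionals are continuous; $X'$ is its continuous dual. $\delta^j$ has $1$ in position $j$, $0$ elsewhere; $\phi=\operatorname{span}\{\delta^j\}$. $p(n)<q(n)$ are nonnegative integer sequences with $q(n)\to\infty$. For $x\in w$, $x^{(k)}=\sum_{j=1}^kx_j\delta^j$; a subset $Y\subseteq X$ has $\sigma_p^q[K]$ if $\frac{1}{q(n)-p(n)}\sum_{k=p(n)+1}^{q(n)}x^{(k)}\to x$ in $X$ for every $x\in Y$. $\sigma_p^q[s]=\{x:\lim_n\frac{1}{q(n)-p(n)}\sum_{k=p(n)+1}^{q(n)}\sum_{j=1}^kx_j\text{ exists}\}$; for $E\subseteq w$, $E^d=\{x\in w:(x_ny_n)_n\in\sigma_p^q[s]\ \forall y\in E\}$, $E^{dd}=(E^d)^d$. $D_p^qF^+(X)=\{x\in w:\lim_n\frac{1}{q(n)-p(n)}\sum_{k=p(n)+1}^{q(n)}\sum_{j=1}^kx_jf(\delta^j)\text{ exists }\forall f\in X'\}$. $X$ has $F\sigma_p^q[K]$ if $X\subseteq D_p^qF^+(X)$. *)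

From Stdlib Require Import Reals Lra Lia.
From Coquelicot Require Import Coquelicot.
Open Scope R_scope.

(** Complex sequences: the space w.  Indices are 0-based: the paper's
    coordinate x_j (j >= 1) is [x (j-1)]. *)
Definition cseq := nat -> C.

Definition szero : cseq := fun _ => RtoC 0.
Definition sadd (x y : cseq) : cseq := fun j => Cplus (x j) (y j).
Definition ssub (x y : cseq) : cseq := fun j => Cminus (x j) (y j).
Definition sscal (c : C) (x : cseq) : cseq := fun j => Cmult c (x j).

Definition Ccv (u : nat -> C) (l : C) : Prop :=
  forall eps : R, 0 < eps -> exists N : nat, forall n : nat, (N <= n)%nat ->
    Cmod (Cminus (u n) l) < eps.

Fixpoint csum (g : nat -> C) (n : nat) : C :=
  match n with O => RtoC 0 | S m => Cplus (csum g m) (g m) end.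
Definition csum_range (g : nat -> C) (a b : nat) : C :=
  csum (fun i => g (a + i)%nat) (b - a).

(** delta^j, phi, sections x^(k) = sum_{j<=k} x_j delta^j (first k coordinates). *)
Definition delta (j : nat) : cseq := fun i => if Nat.eqb i j then RtoC 1 else RtoC 0.
Definition in_phi (x : cseq) : Prop := exists N : nat, forall j, (N <= j)%nat -> x j = RtoC 0.
Definition section (k : nat) (x : cseq) : cseq := fun j => if Nat.ltb j k then x j else RtoC 0.

Definition pqmean (p q : nat -> nat) (n : nat) (g : nat -> C) : C :=
  Cmult (Cinv (RtoC (INR (q n - p n)))) (csum_range g (S (p n)) (S (q n))).

(** A (metrizable, locally convex) topology on the subspace X of w is given by a
    countable family of seminorms [sn k] (k : nat).  In a metrizable space the
    topology is determined by convergent sequences, so convergence, closure,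
    continuity and completeness are expressed sequentially. *)
Definition seq_conv (sn : nat -> cseq -> R) (u : nat -> cseq) (x : cseq) : Prop :=
  forall k : nat, Un_cv (fun n => sn k (ssub (u n) x)) 0.

Definition is_FK (X : cseq -> Prop) (sn : nat -> cseq -> R) : Prop :=
  X szero /\
  (forall x y, X x -> X y -> X (sadd x y)) /\
  (forall c x, X x -> X (sscal c x)) /\
  (forall k x, X x -> 0 <= sn k x) /\
  (forall k x y, X x -> X y -> sn k (sadd x y) <= sn k x + sn k y) /\
  (forall k c x, X x -> sn k (sscal c x) = Cmod c * sn k x) /\
  (forall u : nat -> cseq, (forall n, X (u n)) ->
     (forall k eps, 0 < eps -> exists N : nat, forall m n, (N <= m)%nat -> (N <= n)%nat ->
         sn k (ssub (u m) (u n)) < eps) ->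
     exists x, X x /\ seq_conv sn u x) /\
  (forall (u : nat -> cseq) (x : cseq), (forall n, X (u n)) -> X x ->
     seq_conv sn u x -> forall j, Ccv (fun n => u n j) (x j)).

Definition in_dual (X : cseq -> Prop) (sn : nat -> cseq -> R) (f : cseq -> C) : Prop :=
  (forall x y, X x -> X y -> f (sadd x y) = Cplus (f x) (f y)) /\
  (forall c x, X x -> f (sscal c x) = Cmult c (f x)) /\
  (forall (u : nat -> cseq) (x : cseq), (forall n, X (u n)) -> X x ->
     seq_conv sn u x -> Ccv (fun n => f (u n)) (f x)).

Definition phi_closure (X : cseq -> Prop) (sn : nat -> cseq -> R) (x : cseq) : Prop :=
  X x /\ exists u : nat -> cseq, (forall n, in_phi (u n)) /\ seq_conv sn u x.

Definition has_sigmaK (sn : nat -> cseq -> R) (p q : nat -> nat) (Y : cseq -> Prop) : Prop :=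
  forall x, Y x ->
    seq_conv sn (fun n => fun j => pqmean p q n (fun k => section k x j)) x.

Definition sigma_s (p q : nat -> nat) (x : cseq) : Prop :=
  exists l : C, Ccv (fun n => pqmean p q n (fun k => csum x k)) l.

Definition dual_d (p q : nat -> nat) (E : cseq -> Prop) (x : cseq) : Prop :=
  forall y, E y -> sigma_s p q (fun n => Cmult (x n) (y n)).

Definition DF (X : cseq -> Prop) (sn : nat -> cseq -> R) (p q : nat -> nat) (x : cseq) : Prop :=
  forall f, in_dual X sn f ->
    exists l : C, Ccv (fun n => pqmean p q n
                          (fun k => csum (fun j => Cmult (x j) (f (delta j))) k)) l.

Definition has_FsigmaK (X : cseq -> Prop) (sn : nat -> cseq -> R) (p q : nat -> nat) : Prop :=
  forall x, X x -> DF X sn p q x.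

From Stdlib Require Import Reals Lra Lia Arith.
From Coquelicot Require Import Coquelicot.
From Stdlib Require Import FunctionalExtensionality ClassicalEpsilon Classical.
From mathcomp Require boolp classical_sets.
Open Scope R_scope.

(* Write T_n x for the (p,q)-mean of the sections of x.  T_n x lies in phi, and for linear f,
   f (T_n x) is the (p,q)-mean of the partial sums of sum_j x_j f(delta^j).

   If X has F sigma[K], every orbit (T_n x)_n is thus weakly bounded, hence bounded: Baire's
   theorem in the Banach space of functionals dominated by one seminorm, together with
   Hahn-Banach norming functionals.  Banach-Steinhaus then makes (T_n) equicontinuous, and since
   T_n v -> v for v in phi, T_n x -> x on the closure of phi.

   For z in (closure phi)^d, the functionals u |-> sum_j w_n(j) z_j u_j (w_n(j) the weight of
   coordinate j in T_n) converge on the FK space closure phi; Banach-Steinhaus bounds the limit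
   by a continuous seminorm, and Hahn-Banach extends it to f in X' with f(delta^j) = z_j.  So
   x in X gives x in (closure phi)^dd.

   Conversely, for f in X' and y in closure phi, f (T_n y) -> f y says that (f(delta^j))_j lies
   in (closure phi)^d, and X in (closure phi)^dd is then exactly F sigma[K]. *)

Lemma cseq_ext (x y : cseq) : (forall j, x j = y j) -> x = y.
Proof. intros H; extensionality j; apply H. Qed.

Ltac cseq_ring := apply cseq_ext; intros; unfold sadd, sscal, ssub, szero;
  repeat rewrite ?RtoC_mult, ?RtoC_plus, ?RtoC_opp, ?RtoC_minus.

Lemma RtoC_neq0 (r : R) : r <> 0 -> RtoC r <> RtoC 0.
Proof. intros H E. apply H. apply (f_equal Re) in E. exact E. Qed.

Lemma im_le_Cmod (c : C) : Rabs (Im c) <= Cmod c.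
Proof.
  destruct c as [a b]. unfold Cmod, Im; simpl.
  rewrite <- sqrt_Rsqr_abs. apply sqrt_le_1_alt. unfold Rsqr. nra.
Qed.

Lemma Cmod_RtoC_nonneg (t : R) : 0 <= t -> Cmod (RtoC t) = t.
Proof. intros; rewrite Cmod_R; apply Rabs_right; lra. Qed.

Lemma Cmod_minus_sym (a b : C) : Cmod (Cminus a b) = Cmod (Cminus b a).
Proof. replace (Cminus a b) with (Copp (Cminus b a)) by ring. apply Cmod_opp. Qed.

Lemma Cmod_minus_triangle (a b c : C) :
  Cmod (Cminus a c) <= Cmod (Cminus a b) + Cmod (Cminus b c).
Proof.
  replace (Cminus a c) with (Cplus (Cminus a b) (Cminus b c)) by ring. apply Cmod_triangle.
Qed.

Lemma Cmod_le_minus (a b : C) : Cmod a <= Cmod b + Cmod (Cminus a b).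
Proof. replace a with (Cplus b (Cminus a b)) at 1 by ring. apply Cmod_triangle. Qed.

Lemma Rmult_lt_of_lt_div_succ (a e c : R) : 0 < e -> 0 <= c -> a < e / (c + 1) -> c * a < e.
Proof.
  intros He Hc Ha.
  apply Rmult_lt_compat_l with (r := c + 1) in Ha; [|lra].
  replace ((c + 1) * (e / (c + 1))) with e in Ha by (field; lra).
  destruct (Rle_or_lt 0 a); nra.
Qed.

Lemma Rseq_bounded_prefix (a : nat -> R) N : exists M, forall n, (n < N)%nat -> a n <= M.
Proof.
  induction N as [|N [M HM]].
  - exists 0. intros; lia.
  - exists (Rmax M (a N)). intros n Hn.
    destruct (Nat.eq_dec n N) as [->|ne]; [apply Rmax_r|].
    eapply Rle_trans; [apply HM; lia | apply Rmax_l].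
Qed.

Lemma dependent_choice_nat {St : Type} (valid : St -> Prop) (step : nat -> St -> St -> Prop) (s0 : St) :
  valid s0 -> (forall m s, valid s -> exists s', valid s' /\ step m s s') ->
  exists f : nat -> St, forall m, valid (f m) /\ step m (f m) (f (S m)).
Proof.
  intros H0 Hstep.
  assert (H : forall ms : nat * St, exists s', valid (snd ms) -> valid s' /\ step (fst ms) (snd ms) s').
  { intros [m s]. destruct (classic (valid s)) as [Hs|Hs].
    - destruct (Hstep m s Hs) as [s' Hs']. exists s'. auto.
    - exists s. simpl. tauto. }
  destruct (choice _ H) as [F HF].
  set (f := fix f (m : nat) : St := match m with O => s0 | S m' => F (m', f m') end).
  assert (Hv : forall m, valid (f m)).
  { induction m as [|m IH]; [exact H0|]. exact (proj1 (HF (m, f m) IH)). }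
  exists f. intros m. split; [apply Hv|]. exact (proj2 (HF (m, f m) (Hv m))).
Qed.

Lemma inv_INR_S_eventually_le (r : R) : 0 < r -> exists M, forall n, (M <= n)%nat -> / INR (S n) <= r.
Proof.
  intros Hr. destruct (INR_unbounded (/ r)) as [M HM]. exists M. intros n Hn.
  assert (HM' : / r < INR (S n)) by (eapply Rlt_le_trans; [exact HM | apply le_INR; lia]).
  rewrite <- (Rinv_inv r). left. apply Rinv_lt_contravar; [|exact HM'].
  apply Rmult_lt_0_compat; [apply Rinv_0_lt_compat; lra | apply lt_0_INR; lia].
Qed.

Lemma inv_INR_S_pos n : 0 < / INR (S n).
Proof. apply Rinv_0_lt_compat, lt_0_INR; lia. Qed.

Lemma Ccv_unique (u : nat -> C) l1 l2 : Ccv u l1 -> Ccv u l2 -> l1 = l2.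
Proof.
  intros H1 H2.
  destruct (Req_dec (Cmod (Cminus l1 l2)) 0) as [E|E].
  - apply Cmod_eq_0 in E. replace l1 with (Cplus (Cminus l1 l2) l2) by ring. rewrite E. ring.
  - assert (P2 : 0 < Cmod (Cminus l1 l2) / 2) by (pose proof (Cmod_ge_0 (Cminus l1 l2)); lra).
    destruct (H1 _ P2) as [N1 HN1]. destruct (H2 _ P2) as [N2 HN2].
    specialize (HN1 (max N1 N2) ltac:(lia)). specialize (HN2 (max N1 N2) ltac:(lia)).
    pose proof (Cmod_minus_triangle l1 (u (max N1 N2)) l2).
    rewrite (Cmod_minus_sym l1 (u (max N1 N2))) in H. lra.
Qed.

Lemma Ccv_ext (u v : nat -> C) l : (forall n, u n = v n) -> Ccv u l -> Ccv v l.
Proof.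
  intros E H eps He. destruct (H eps He) as [N HN]. exists N. intros n Hn. rewrite <- E. auto.
Qed.

Lemma Ccv_plus (u v : nat -> C) a b :
  Ccv u a -> Ccv v b -> Ccv (fun n => Cplus (u n) (v n)) (Cplus a b).
Proof.
  intros Hu Hv eps He.
  destruct (Hu (eps / 2) ltac:(lra)) as [N1 H1]. destruct (Hv (eps / 2) ltac:(lra)) as [N2 H2].
  exists (max N1 N2). intros n Hn.
  replace (Cminus (Cplus (u n) (v n)) (Cplus a b))
    with (Cplus (Cminus (u n) a) (Cminus (v n) b)) by ring.
  pose proof (Cmod_triangle (Cminus (u n) a) (Cminus (v n) b)).
  specialize (H1 n ltac:(lia)). specialize (H2 n ltac:(lia)). lra.
Qed.

Lemma Ccv_scal (u : nat -> C) a c : Ccv u a -> Ccv (fun n => Cmult c (u n)) (Cmult c a).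
Proof.
  intros Hu eps He.
  assert (P : 0 < eps / (Cmod c + 1)) by (pose proof (Cmod_ge_0 c); apply Rdiv_lt_0_compat; lra).
  destruct (Hu _ P) as [N H]. exists N. intros n Hn.
  replace (Cminus (Cmult c (u n)) (Cmult c a)) with (Cmult c (Cminus (u n) a)) by ring.
  rewrite Cmod_mult. apply Rmult_lt_of_lt_div_succ; auto. apply Cmod_ge_0.
Qed.

Lemma Ccv_dist_le (u : nat -> C) l b M N : Ccv u l ->
  (forall n, (N <= n)%nat -> Cmod (Cminus (u n) b) <= M) -> Cmod (Cminus l b) <= M.
Proof.
  intros Hu HM. apply Rnot_lt_le. intros Hlt.
  destruct (Hu (Cmod (Cminus l b) - M) ltac:(lra)) as [N1 H1].
  specialize (H1 (max N N1) ltac:(lia)). specialize (HM (max N N1) ltac:(lia)).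
  pose proof (Cmod_minus_triangle l (u (max N N1)) b).
  rewrite (Cmod_minus_sym l (u (max N N1))) in H. lra.
Qed.

Lemma Ccv_Cmod_le (u : nat -> C) l M : Ccv u l -> (forall n, Cmod (u n) <= M) -> Cmod l <= M.
Proof.
  intros Hu HM. replace l with (Cminus l 0) by ring. apply (Ccv_dist_le u l 0 M 0); auto.
  intros n _. replace (Cminus (u n) 0) with (u n) by ring. auto.
Qed.

Lemma Ccv_bounded (u : nat -> C) l : Ccv u l -> exists M, forall n, Cmod (u n) <= M.
Proof.
  intros Hu. destruct (Hu 1 Rlt_0_1) as [N HN].
  destruct (Rseq_bounded_prefix (fun n => Cmod (u n)) N) as [M HM].
  exists (Rmax M (Cmod l + 1)). intros n.
  destruct (le_lt_dec N n) as [h|h].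
  - specialize (HN n h). pose proof (Cmod_le_minus (u n) l). eapply Rle_trans; [|apply Rmax_r]. lra.
  - eapply Rle_trans; [apply HM; auto | apply Rmax_l].
Qed.

Lemma Ccv_Cmod_cv0 (u : nat -> C) l : Ccv u l -> Un_cv (fun n => Cmod (Cminus (u n) l)) 0.
Proof.
  intros H eps He. destruct (H eps He) as [N HN]. exists N. intros n Hn.
  unfold R_dist. rewrite Rminus_0_r, Rabs_right by (apply Rle_ge, Cmod_ge_0). auto.
Qed.

Lemma Ccv_Cauchy (u : nat -> C) :
  (forall eps, 0 < eps -> exists N, forall m n, (N <= m)%nat -> (N <= n)%nat ->
     Cmod (Cminus (u m) (u n)) < eps) ->
  exists l, Ccv u l.
Proof.
  intros H.
  assert (CR : Cauchy_crit (fun n => Re (u n))).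
  { intros eps He. destruct (H eps He) as [N HN]. exists N. intros m n Hm Hn.
    unfold R_dist. eapply Rle_lt_trans; [|apply (HN m n); lia].
    replace (Re (u m) - Re (u n)) with (Re (Cminus (u m) (u n))) by (destruct (u m), (u n); simpl; ring).
    apply re_le_Cmod. }
  assert (CI : Cauchy_crit (fun n => Im (u n))).
  { intros eps He. destruct (H eps He) as [N HN]. exists N. intros m n Hm Hn.
    unfold R_dist. eapply Rle_lt_trans; [|apply (HN m n); lia].
    replace (Im (u m) - Im (u n)) with (Im (Cminus (u m) (u n))) by (destruct (u m), (u n); simpl; ring).
    apply im_le_Cmod. }
  destruct (Rcomplete.R_complete _ CR) as [a Ha]. destruct (Rcomplete.R_complete _ CI) as [b Hb].
  exists (a, b). intros eps He.
  destruct (Ha (eps / 2) ltac:(lra)) as [N1 H1]. destruct (Hb (eps / 2) ltac:(lra)) as [N2 H2].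
  exists (max N1 N2). intros n Hn.
  specialize (H1 n ltac:(lia)). specialize (H2 n ltac:(lia)). unfold R_dist in *.
  assert (S2 : sqrt 2 <= 2) by (rewrite <- (sqrt_square 2) at 2 by lra; apply sqrt_le_1_alt; lra).
  eapply Rle_lt_trans; [apply Cmod_2Rmax|].
  destruct (u n) as [x y]. simpl in *.
  replace (x + - a) with (x - a) by ring. replace (y + - b) with (y - b) by ring.
  pose proof (Rabs_pos (x - a)). pose proof (Rabs_pos (y - b)).
  unfold Rmax. destruct (Rle_dec _ _); nra.
Qed.

Lemma Un_cv_squeeze0 (a b : nat -> R) : (forall n, 0 <= a n <= b n) -> Un_cv b 0 -> Un_cv a 0.
Proof.
  intros H Hb eps He. destruct (Hb eps He) as [N HN]. exists N. intros n Hn.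
  specialize (HN n Hn). specialize (H n). unfold R_dist in *. rewrite Rminus_0_r in *.
  rewrite Rabs_right in * by lra. lra.
Qed.

Lemma Un_cv_plus0 (a b : nat -> R) : Un_cv a 0 -> Un_cv b 0 -> Un_cv (fun n => a n + b n) 0.
Proof. intros. replace 0 with (0 + 0) by ring. apply CV_plus; auto. Qed.

Lemma Un_cv_scal0 (a : nat -> R) c : Un_cv a 0 -> Un_cv (fun n => a n * c) 0.
Proof.
  intros H. replace 0 with (0 * c) by ring. apply CV_mult; auto.
  intros eps He. exists 0%nat. intros. unfold R_dist. rewrite Rminus_diag, Rabs_R0. auto.
Qed.

Lemma Un_cv_nonneg_lt (a : nat -> R) : (forall n, 0 <= a n) -> Un_cv a 0 ->
  forall eps, 0 < eps -> exists N, forall n, (N <= n)%nat -> a n < eps.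
Proof.
  intros Ha H eps He. destruct (H eps He) as [N HN]. exists N. intros n Hn.
  specialize (HN n Hn). unfold R_dist in HN. rewrite Rminus_0_r, Rabs_right in HN; auto.
  apply Rle_ge, Ha.
Qed.

Lemma csum_ext (g h : nat -> C) n : (forall j, (j < n)%nat -> g j = h j) -> csum g n = csum h n.
Proof.
  induction n; simpl; intros H; auto.
  rewrite IHn by (intros; apply H; lia). rewrite H by lia. auto.
Qed.

Lemma csum_plus (g h : nat -> C) n :
  csum (fun i => Cplus (g i) (h i)) n = Cplus (csum g n) (csum h n).
Proof. induction n; simpl. ring. rewrite IHn. ring. Qed.

Lemma csum_scal (g : nat -> C) c n : csum (fun i => Cmult c (g i)) n = Cmult c (csum g n).
Proof. induction n; simpl. ring. rewrite IHn. ring. Qed.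

Lemma csum_zero n : csum (fun _ => RtoC 0) n = RtoC 0.
Proof. induction n; simpl; auto. rewrite IHn. ring. Qed.

Lemma csum_one n : csum (fun _ => RtoC 1) n = RtoC (INR n).
Proof.
  induction n; [reflexivity|].
  change (csum (fun _ => RtoC 1) (S n)) with (Cplus (csum (fun _ => RtoC 1) n) (RtoC 1)).
  rewrite IHn, S_INR, RtoC_plus. auto.
Qed.

Lemma csum_swap (G : nat -> nat -> C) M N :
  csum (fun i => csum (fun j => G i j) N) M = csum (fun j => csum (fun i => G i j) M) N.
Proof.
  induction M; simpl. symmetry. apply csum_zero.
  rewrite IHM, <- csum_plus. auto.
Qed.

Lemma delta_sym i j : delta j i = delta i j.
Proof. unfold delta. destruct (Nat.eqb_spec i j), (Nat.eqb_spec j i); congruence. Qed.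

Lemma csum_delta (a : nat -> C) i N :
  csum (fun j => Cmult (a j) (delta j i)) N = if Nat.ltb i N then a i else RtoC 0.
Proof.
  induction N; simpl; auto.
  rewrite IHN. unfold delta.
  destruct (Nat.ltb_spec i N), (Nat.ltb_spec i (S N)), (Nat.eqb_spec i N); try lia; subst; ring.
Qed.

Definition ind_lt (j k : nat) : C := if Nat.ltb j k then RtoC 1 else RtoC 0.

Lemma csum_ind_lt (a : nat -> C) k N : (k <= N)%nat ->
  csum a k = csum (fun j => Cmult (ind_lt j k) (a j)) N.
Proof.
  induction N; intros H.
  - replace k with 0%nat by lia. auto.
  - destruct (Nat.eq_dec k (S N)) as [->|ne]; simpl.
    + replace (ind_lt N (S N)) with (RtoC 1)
        by (unfold ind_lt; rewrite (proj2 (Nat.ltb_lt N (S N))) by lia; auto).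
      f_equal; [|ring]. apply csum_ext. intros j Hj. unfold ind_lt.
      rewrite (proj2 (Nat.ltb_lt j (S N))) by lia. ring.
    + rewrite IHN by lia.
      replace (ind_lt N k) with (RtoC 0) by (unfold ind_lt; rewrite (proj2 (Nat.ltb_ge N k)) by lia; auto).
      ring.
Qed.

Fixpoint rsum (a : nat -> R) (n : nat) : R :=
  match n with O => 0 | S m => rsum a m + a m end.

Lemma rsum_nonneg (a : nat -> R) n : (forall i, (i < n)%nat -> 0 <= a i) -> 0 <= rsum a n.
Proof.
  induction n; simpl; intros H; [lra|].
  pose proof (H n ltac:(lia)). pose proof (IHn ltac:(intros; apply H; lia)). lra.
Qed.

Lemma rsum_le (a b : nat -> R) n : (forall i, (i < n)%nat -> a i <= b i) -> rsum a n <= rsum b n.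
Proof.
  induction n; simpl; intros H; [lra|].
  pose proof (H n ltac:(lia)). pose proof (IHn ltac:(intros; apply H; lia)). lra.
Qed.

Lemma rsum_ge_term (a : nat -> R) n i : (forall i, (i < n)%nat -> 0 <= a i) -> (i < n)%nat ->
  a i <= rsum a n.
Proof.
  induction n; simpl; intros H Hi; [lia|].
  destruct (Nat.eq_dec i n) as [->|ne].
  - pose proof (rsum_nonneg a n ltac:(intros; apply H; lia)). lra.
  - pose proof (IHn ltac:(intros; apply H; lia) ltac:(lia)). pose proof (H n ltac:(lia)). lra.
Qed.

Lemma rsum_scal (a : nat -> R) c n : rsum (fun i => c * a i) n = c * rsum a n.
Proof. induction n; simpl. ring. rewrite IHn. ring. Qed.

Lemma rsum_plus (a b : nat -> R) n : rsum (fun i => a i + b i) n = rsum a n + rsum b n.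
Proof. induction n; simpl. ring. rewrite IHn. ring. Qed.

Lemma Cmod_csum_le (g : nat -> C) n : Cmod (csum g n) <= rsum (fun i => Cmod (g i)) n.
Proof.
  induction n; simpl. rewrite Cmod_0. lra.
  eapply Rle_trans. apply Cmod_triangle. lra.
Qed.

Lemma rsum_cv0 (a : nat -> nat -> R) N :
  (forall i, (i < N)%nat -> Un_cv (fun n => a n i) 0) -> Un_cv (fun n => rsum (a n) N) 0.
Proof.
  induction N; intros H; simpl.
  - intros eps He. exists 0%nat. intros. unfold R_dist. rewrite Rminus_0_r, Rabs_R0. auto.
  - apply Un_cv_plus0; [apply IHN; intros; apply H|apply H]; lia.
Qed.

Definition is_subspace (X : cseq -> Prop) : Prop :=
  X szero /\ (forall x y, X x -> X y -> X (sadd x y)) /\ (forall c x, X x -> X (sscal c x)).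

Definition is_seminorm (X : cseq -> Prop) (rho : cseq -> R) : Prop :=
  (forall x y, X x -> X y -> rho (sadd x y) <= rho x + rho y) /\
  (forall c x, X x -> rho (sscal c x) = Cmod c * rho x).

Definition linear_on (X : cseq -> Prop) (f : cseq -> C) : Prop :=
  (forall x y, X x -> X y -> f (sadd x y) = Cplus (f x) (f y)) /\
  (forall c x, X x -> f (sscal c x) = Cmult c (f x)).

Definition vsum (G : nat -> cseq) (n : nat) : cseq := fun j => csum (fun i => G i j) n.

Lemma vsum_S G n : vsum G (S n) = sadd (vsum G n) (G n).
Proof. reflexivity. Qed.

Lemma vsum_0 G : vsum G 0 = szero.
Proof. reflexivity. Qed.

Lemma ssub_sadd_opp x y : ssub x y = sadd x (sscal (Copp (RtoC 1)) y).
Proof. cseq_ring. ring. Qed.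

Section Subspace.
Variable X : cseq -> Prop.
Hypothesis HX : is_subspace X.

Lemma subspace_zero : X szero. Proof. apply HX. Qed.
Lemma subspace_add x y : X x -> X y -> X (sadd x y). Proof. apply HX. Qed.
Lemma subspace_scal c x : X x -> X (sscal c x). Proof. apply HX. Qed.

Lemma subspace_sub x y : X x -> X y -> X (ssub x y).
Proof. intros. rewrite ssub_sadd_opp. apply subspace_add, subspace_scal; auto. Qed.

Lemma subspace_vsum G n : (forall i, (i < n)%nat -> X (G i)) -> X (vsum G n).
Proof.
  induction n; intros H; [apply subspace_zero|].
  rewrite vsum_S. apply subspace_add; [apply IHn; intros|]; apply H; lia.
Qed.

Lemma linear_zero f : linear_on X f -> f szero = RtoC 0.
Proof.
  intros [_ H]. replace szero with (sscal (RtoC 0) szero) by (cseq_ring; ring).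
  rewrite H by apply subspace_zero. ring.
Qed.

Lemma linear_sub f x y : linear_on X f -> X x -> X y -> f (ssub x y) = Cminus (f x) (f y).
Proof.
  intros [fadd fscal] Hx Hy.
  rewrite ssub_sadd_opp, fadd, fscal by (auto using subspace_scal). ring.
Qed.

Lemma linear_vsum f G n : linear_on X f -> (forall i, (i < n)%nat -> X (G i)) ->
  f (vsum G n) = csum (fun i => f (G i)) n.
Proof.
  intros Hf. induction n; intros H; [apply linear_zero; auto|].
  rewrite vsum_S. simpl. rewrite (proj1 Hf), IHn; auto.
  apply subspace_vsum; intros; apply H; lia.
Qed.

Lemma linear_Cmod_seminorm f : linear_on X f -> is_seminorm X (fun u => Cmod (f u)).
Proof.
  intros [fadd fscal]. split.
  - intros x y Hx Hy. rewrite fadd by auto. apply Cmod_triangle.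
  - intros c x Hx. rewrite fscal, Cmod_mult by auto. auto.
Qed.

Section Seminorm.
Variable rho : cseq -> R.
Hypothesis Hrho : is_seminorm X rho.

Lemma seminorm_scal c x : X x -> rho (sscal c x) = Cmod c * rho x.
Proof. apply Hrho. Qed.

Lemma seminorm_triangle x y : X x -> X y -> rho (sadd x y) <= rho x + rho y.
Proof. apply Hrho. Qed.

Lemma seminorm_zero : rho szero = 0.
Proof.
  replace szero with (sscal (RtoC 0) szero) by (cseq_ring; ring).
  rewrite seminorm_scal by apply subspace_zero. rewrite Cmod_0. ring.
Qed.

Lemma seminorm_rscal t x : 0 <= t -> X x -> rho (sscal (RtoC t) x) = t * rho x.
Proof. intros. rewrite seminorm_scal, Cmod_RtoC_nonneg; auto. Qed.

Lemma seminorm_sub_sym x y : X x -> X y -> rho (ssub x y) = rho (ssub y x).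
Proof.
  intros. replace (ssub x y) with (sscal (Copp (RtoC 1)) (ssub y x)) by (cseq_ring; ring).
  rewrite seminorm_scal, Cmod_opp, Cmod_1 by (apply subspace_sub; auto). ring.
Qed.

Lemma seminorm_sub_le x y : X x -> X y -> rho (ssub x y) <= rho x + rho y.
Proof.
  intros. rewrite ssub_sadd_opp. eapply Rle_trans; [apply seminorm_triangle; auto using subspace_scal|].
  rewrite seminorm_scal, Cmod_opp, Cmod_1 by auto. lra.
Qed.

Lemma seminorm_le_sub x y : X x -> X y -> rho x <= rho y + rho (ssub x y).
Proof.
  intros. replace x with (sadd y (ssub x y)) at 1 by (cseq_ring; ring).
  apply seminorm_triangle; auto using subspace_sub.
Qed.

Lemma seminorm_sub_triangle x y z : X x -> X y -> X z ->
  rho (ssub x z) <= rho (ssub x y) + rho (ssub y z).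
Proof.
  intros. replace (ssub x z) with (sadd (ssub x y) (ssub y z)) by (cseq_ring; ring).
  apply seminorm_triangle; auto using subspace_sub.
Qed.

Lemma seminorm_nonneg x : X x -> 0 <= rho x.
Proof.
  intros Hx. pose proof (seminorm_sub_le x x Hx Hx).
  replace (ssub x x) with szero in H by (cseq_ring; ring). rewrite seminorm_zero in H. lra.
Qed.

Lemma seminorm_vsum G n : (forall i, (i < n)%nat -> X (G i)) ->
  rho (vsum G n) <= rsum (fun i => rho (G i)) n.
Proof.
  induction n; intros H; simpl; [rewrite vsum_0, seminorm_zero; lra|].
  rewrite vsum_S. eapply Rle_trans; [apply seminorm_triangle|].
  - apply subspace_vsum; intros; apply H; lia.
  - apply H; lia.
  - pose proof (IHn ltac:(intros; apply H; lia)). lra.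
Qed.

End Seminorm.
End Subspace.

Definition sn_upto (sn : nat -> cseq -> R) (K : nat) (a : cseq) : R := rsum (fun j => sn j a) (S K).

Section FK.
Variables (X : cseq -> Prop) (sn : nat -> cseq -> R).
Hypothesis HFK : is_FK X sn.

Lemma FK_subspace : is_subspace X.
Proof. destruct HFK as (H0 & Hadd & Hscal & _). repeat split; auto. Qed.

Lemma FK_seminorm k : is_seminorm X (sn k).
Proof. destruct HFK as (_ & _ & _ & _ & Htri & Hhom & _). split; auto. Qed.

Lemma FK_complete (u : nat -> cseq) : (forall n, X (u n)) ->
  (forall k eps, 0 < eps -> exists N : nat, forall m n, (N <= m)%nat -> (N <= n)%nat ->
     sn k (ssub (u m) (u n)) < eps) ->
  exists x, X x /\ seq_conv sn u x.
Proof. apply HFK. Qed.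

Lemma FK_coord (u : nat -> cseq) x : (forall n, X (u n)) -> X x -> seq_conv sn u x ->
  forall j, Ccv (fun n => u n j) (x j).
Proof. apply HFK. Qed.

Lemma sn_nonneg k x : X x -> 0 <= sn k x.
Proof. apply (seminorm_nonneg X FK_subspace _ (FK_seminorm k)). Qed.

Lemma sn_sub_nonneg k x y : X x -> X y -> 0 <= sn k (ssub x y).
Proof. intros. apply sn_nonneg, (subspace_sub X FK_subspace); auto. Qed.

Lemma sn_self k x : sn k (ssub x x) = 0.
Proof.
  replace (ssub x x) with szero by (cseq_ring; ring).
  apply (seminorm_zero X FK_subspace _ (FK_seminorm k)).
Qed.

Lemma sn_sub_sym k x y : X x -> X y -> sn k (ssub x y) = sn k (ssub y x).
Proof. apply (seminorm_sub_sym X FK_subspace _ (FK_seminorm k)). Qed.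

Lemma sn_sub_triangle k x y z : X x -> X y -> X z ->
  sn k (ssub x z) <= sn k (ssub x y) + sn k (ssub y z).
Proof. apply (seminorm_sub_triangle X FK_subspace _ (FK_seminorm k)). Qed.

Lemma FK_coord_cv0 (w : nat -> cseq) : (forall l, X (w l)) -> seq_conv sn w szero ->
  forall j, Un_cv (fun l => Cmod (w l j)) 0.
Proof.
  intros Xw Cw j.
  pose proof (Ccv_Cmod_cv0 _ _ (FK_coord w szero Xw (subspace_zero X FK_subspace) Cw j)) as H.
  unfold szero in H. intros eps He. destruct (H eps He) as [N HN]. exists N. intros n Hn.
  specialize (HN n Hn). replace (Cminus (w n j) (RtoC 0)) with (w n j) in HN by ring. auto.
Qed.

Lemma seq_conv_sn_lt (u : nat -> cseq) x k eps : (forall n, X (u n)) -> X x ->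
  seq_conv sn u x -> 0 < eps -> exists N, forall n, (N <= n)%nat -> sn k (ssub (u n) x) < eps.
Proof.
  intros Xu Xx Hc. apply Un_cv_nonneg_lt; auto. intros n. apply sn_sub_nonneg; auto.
Qed.

Lemma sn_upto_seminorm K : is_seminorm X (sn_upto sn K).
Proof.
  unfold sn_upto. split.
  - intros a b Ha Hb. rewrite <- rsum_plus. apply rsum_le. intros j _.
    apply (seminorm_triangle X (sn j) (FK_seminorm j)); auto.
  - intros c a Ha. rewrite <- rsum_scal. induction (S K); simpl; auto.
    rewrite IHn, (seminorm_scal X (sn n) (FK_seminorm n)); auto.
Qed.

Lemma sn_upto_ge K a j : X a -> (j <= K)%nat -> sn j a <= sn_upto sn K a.
Proof.
  intros Ha Hj. apply (rsum_ge_term (fun j => sn j a)); [|lia].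
  intros i _. apply sn_nonneg; auto.
Qed.

Lemma seq_conv_sn_upto (u : nat -> cseq) x K : seq_conv sn u x ->
  Un_cv (fun n => sn_upto sn K (ssub (u n) x)) 0.
Proof. intros Hc. apply (rsum_cv0 (fun n j => sn j (ssub (u n) x))). auto. Qed.

Lemma sn_upto_dominated_in_dual f K c : 0 <= c -> linear_on X f ->
  (forall u, X u -> Cmod (f u) <= c * sn_upto sn K u) -> in_dual X sn f.
Proof.
  intros Hc Hf Hb. split; [apply Hf|]. split; [apply Hf|].
  intros u x Xu Xx Hux eps He.
  pose proof FK_subspace as XS.
  destruct (Un_cv_nonneg_lt _
     (fun n => seminorm_nonneg X XS _ (sn_upto_seminorm K) _ (subspace_sub X XS _ _ (Xu n) Xx))
     (seq_conv_sn_upto u x K Hux) (eps / (c + 1)) ltac:(apply Rdiv_lt_0_compat; lra)) as [N HN].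
  exists N. intros n Hn. rewrite <- (linear_sub X XS f) by auto.
  eapply Rle_lt_trans; [apply Hb, subspace_sub; auto|].
  apply Rmult_lt_of_lt_div_succ; auto.
Qed.

End FK.

Lemma phi_delta j : in_phi (delta j).
Proof. exists (S j). intros i Hi. unfold delta. destruct (Nat.eqb_spec i j); auto. lia. Qed.

Section Means.
Variables p q : nat -> nat.

Definition mean_weight (n j : nat) : C := pqmean p q n (fun k => ind_lt j k).
Definition mean_section (n : nat) (w : cseq) : cseq :=
  fun j => pqmean p q n (fun k => section k w j).

Lemma pqmean_scal_r n g c : pqmean p q n (fun k => Cmult (g k) c) = Cmult (pqmean p q n g) c.
Proof.
  unfold pqmean, csum_range.
  rewrite (csum_ext _ (fun i => Cmult c (g (S (p n) + i)%nat))) by (intros; ring).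
  rewrite csum_scal. ring.
Qed.

Lemma mean_section_eq n w j : mean_section n w j = Cmult (mean_weight n j) (w j).
Proof.
  unfold mean_section, mean_weight. rewrite <- pqmean_scal_r. f_equal. extensionality k.
  unfold section, ind_lt. destruct (Nat.ltb j k); ring.
Qed.

Lemma mean_weight_beyond n j : (q n <= j)%nat -> mean_weight n j = RtoC 0.
Proof.
  intros H. unfold mean_weight, pqmean, csum_range.
  rewrite (csum_ext _ (fun _ => RtoC 0)), csum_zero; [ring|].
  intros i Hi. unfold ind_lt. destruct (Nat.ltb_spec j (S (p n) + i)); auto. lia.
Qed.

Lemma mean_section_vsum n w :
  mean_section n w = vsum (fun j => sscal (Cmult (mean_weight n j) (w j)) (delta j)) (q n).
Proof.
  apply cseq_ext; intros i. unfold vsum, sscal.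
  rewrite csum_delta, mean_section_eq. destruct (Nat.ltb_spec i (q n)); auto.
  rewrite mean_weight_beyond by lia. ring.
Qed.

Lemma mean_section_phi n w : in_phi (mean_section n w).
Proof. exists (q n). intros j Hj. rewrite mean_section_eq, mean_weight_beyond by lia. ring. Qed.

Lemma mean_section_sscal n c a : mean_section n (sscal c a) = sscal c (mean_section n a).
Proof. apply cseq_ext; intros j. unfold sscal. rewrite !mean_section_eq. ring. Qed.

Lemma mean_section_sadd n a b :
  mean_section n (sadd a b) = sadd (mean_section n a) (mean_section n b).
Proof. apply cseq_ext; intros j. unfold sadd. rewrite !mean_section_eq. ring. Qed.

Lemma mean_section_ssub n a b :
  mean_section n (ssub a b) = ssub (mean_section n a) (mean_section n b).
Proof. apply cseq_ext; intros j. unfold ssub. rewrite !mean_section_eq. ring. Qed.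

Lemma pqmean_partial_sums n (a : nat -> C) :
  pqmean p q n (fun k => csum a k) = csum (fun j => Cmult (mean_weight n j) (a j)) (q n).
Proof.
  unfold pqmean at 1. unfold csum_range.
  rewrite (csum_ext (fun i => csum a (S (p n) + i))
            (fun i => csum (fun j => Cmult (ind_lt j (S (p n) + i)) (a j)) (q n)))
    by (intros; apply csum_ind_lt; lia).
  rewrite csum_swap, <- csum_scal. apply csum_ext. intros j _.
  unfold mean_weight, pqmean, csum_range.
  rewrite (csum_ext _ (fun i => Cmult (a j) (ind_lt j (S (p n) + i)))) by (intros; ring).
  rewrite csum_scal. ring.
Qed.

Lemma rsum_count_le a j m :
  rsum (fun i => if Nat.leb (S a + i) j then 1 else 0) m <= INR (Nat.min m (j - a)).
Proof.
  induction m; [simpl; lra|]. cbn [rsum].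
  destruct (Nat.leb_spec (S a + m) j).
  - replace (Nat.min (S m) (j - a)) with (S (Nat.min m (j - a))) by lia. rewrite S_INR. lra.
  - eapply Rle_trans; [|apply le_INR, (Nat.min_le_compat_r m (S m)); lia]. lra.
Qed.

Hypothesis Hpq : forall n, (p n < q n)%nat.
Hypothesis Hq : forall M : nat, exists N : nat, forall n, (N <= n)%nat -> (M <= q n)%nat.

(* Only the indices k <= j of the window p(n) < k <= q(n) miss coordinate j. *)
Lemma mean_weight_dist_le n j :
  Cmod (Cminus (mean_weight n j) (RtoC 1)) <= INR (Nat.min (q n - p n) (j - p n)) / INR (q n - p n).
Proof.
  set (m := (q n - p n)%nat).
  assert (Hm : 0 < INR m) by (apply lt_0_INR; specialize (Hpq n); unfold m; lia).
  assert (E : Cminus (mean_weight n j) (RtoC 1) =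
     Cmult (Cinv (RtoC (INR m))) (Copp (csum (fun i => Cminus (RtoC 1) (ind_lt j (S (p n) + i))) m))).
  { unfold mean_weight, pqmean, csum_range. fold m.
    replace (S (q n) - S (p n))%nat with m by (unfold m; lia).
    unfold Cminus at 2. rewrite csum_plus, csum_one.
    rewrite (csum_ext (fun i => Copp (ind_lt j (S (p n) + i)))
               (fun i => Cmult (Copp (RtoC 1)) (ind_lt j (S (p n) + i)))) by (intros; ring).
    rewrite csum_scal. field. apply RtoC_neq0. lra. }
  rewrite E, Cmod_mult, Cmod_opp, Cmod_inv by (apply RtoC_neq0; lra).
  rewrite Cmod_RtoC_nonneg by lra.
  unfold Rdiv. rewrite Rmult_comm. apply Rmult_le_compat_r; [apply Rlt_le, Rinv_0_lt_compat; lra|].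
  eapply Rle_trans; [apply Cmod_csum_le|]. eapply Rle_trans; [|apply rsum_count_le].
  apply rsum_le. intros i _. unfold ind_lt.
  destruct (Nat.ltb_spec j (S (p n) + i)), (Nat.leb_spec (S (p n) + i) j); try lia.
  - replace (Cminus 1 1) with (RtoC 0) by ring. rewrite Cmod_0. lra.
  - replace (Cminus 1 0) with (RtoC 1) by ring. rewrite Cmod_1. lra.
Qed.

Lemma mean_weight_cv j : Ccv (fun n => mean_weight n j) (RtoC 1).
Proof.
  intros eps He.
  destruct (INR_unbounded (INR j / eps)) as [M HM].
  destruct (Hq (j + M + 1)%nat) as [N HN]. exists N. intros n Hn.
  specialize (HN n Hn). eapply Rle_lt_trans; [apply mean_weight_dist_le|].
  destruct (le_lt_dec j (p n)) as [h|h].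
  - replace (j - p n)%nat with 0%nat by lia. rewrite Nat.min_0_r. simpl. unfold Rdiv. lra.
  - assert (H1 : INR (Nat.min (q n - p n) (j - p n)) <= INR j) by (apply le_INR; lia).
    assert (H2 : INR (M + 1) <= INR (q n - p n)) by (apply le_INR; lia).
    rewrite plus_INR in H2. simpl in H2.
    assert (H3 : INR j < eps * INR M).
    { apply Rmult_lt_compat_l with (r := eps) in HM; auto. unfold Rdiv in HM.
      replace (eps * (INR j * / eps)) with (INR j) in HM by (field; lra). lra. }
    pose proof (pos_INR M). pose proof (pos_INR (Nat.min (q n - p n) (j - p n))).
    apply Rmult_lt_reg_r with (INR (q n - p n)); [lra|].
    unfold Rdiv. rewrite Rmult_assoc, Rinv_l by lra. nra.
Qed.

End Means.

Section MeansFK.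
Variables (X : cseq -> Prop) (sn : nat -> cseq -> R) (p q : nat -> nat).
Hypothesis HFK : is_FK X sn.
Hypothesis Hphi : forall x, in_phi x -> X x.

Let XS := FK_subspace X sn HFK.

Lemma phi_incl_delta j : X (delta j).
Proof. apply Hphi, phi_delta. Qed.

Lemma phi_incl_mean_section n w : X (mean_section p q n w).
Proof. apply Hphi, mean_section_phi. Qed.

Lemma FK_scal_delta c j : X (sscal c (delta j)).
Proof. apply subspace_scal, phi_incl_delta; auto. Qed.

Lemma linear_mean_section f n w : linear_on X f ->
  f (mean_section p q n w) = pqmean p q n (fun k => csum (fun j => Cmult (w j) (f (delta j))) k).
Proof.
  intros Hf. rewrite pqmean_partial_sums, mean_section_vsum, (linear_vsum X XS); auto.
  - apply csum_ext. intros j _. rewrite (proj2 Hf) by apply phi_incl_delta. ring.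
  - intros i _. apply FK_scal_delta.
Qed.

Lemma sn_mean_section_le k n w : sn k (mean_section p q n w) <=
  rsum (fun j => Cmod (mean_weight p q n j) * (Cmod (w j) * sn k (delta j))) (q n).
Proof.
  rewrite mean_section_vsum. eapply Rle_trans.
  - apply (seminorm_vsum X XS _ (FK_seminorm X sn HFK k)). intros; apply FK_scal_delta.
  - apply rsum_le. intros i _.
    rewrite (seminorm_scal X (sn k) (FK_seminorm X sn HFK k)), Cmod_mult by apply phi_incl_delta.
    right; ring.
Qed.

Hypothesis Hpq : forall n, (p n < q n)%nat.
Hypothesis Hq : forall M : nat, exists N : nat, forall n, (N <= n)%nat -> (M <= q n)%nat.

Lemma mean_section_cv_phi v : in_phi v -> seq_conv sn (fun n => mean_section p q n v) v.
Proof.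
  intros Hv k. pose proof (Hphi v Hv) as Xv. destruct Hv as [N HN].
  assert (E : forall n, ssub (mean_section p q n v) v =
     vsum (fun j => sscal (Cmult (Cminus (mean_weight p q n j) (RtoC 1)) (v j)) (delta j)) N).
  { intros n. apply cseq_ext; intros i. unfold vsum, sscal, ssub.
    rewrite csum_delta, mean_section_eq.
    destruct (Nat.ltb_spec i N); [ring|]. rewrite HN by lia. ring. }
  apply Un_cv_squeeze0 with (fun n => rsum (fun j =>
     Cmod (Cminus (mean_weight p q n j) (RtoC 1)) * (Cmod (v j) * sn k (delta j))) N).
  - intros n. split.
    + apply (seminorm_nonneg X XS _ (FK_seminorm X sn HFK k)), subspace_sub, Xv; auto.
      apply phi_incl_mean_section.
    + rewrite E. eapply Rle_trans.
      * apply (seminorm_vsum X XS _ (FK_seminorm X sn HFK k)). intros; apply FK_scal_delta.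
      * apply rsum_le. intros i _.
        rewrite (seminorm_scal X (sn k) (FK_seminorm X sn HFK k)), Cmod_mult by apply phi_incl_delta.
        right; ring.
  - apply rsum_cv0. intros i _. apply Un_cv_scal0, Ccv_Cmod_cv0, mean_weight_cv; auto.
Qed.

End MeansFK.

Section Baire.
(* B j x r y: y lies within distance r of x for the j-th pseudometric on Y. *)
Variables (V : Type) (Y : V -> Prop) (B : nat -> V -> R -> V -> Prop).
Hypothesis Bsym : forall j a b r, Y a -> Y b -> B j a r b -> B j b r a.
Hypothesis Btri : forall j a b c r s, Y a -> Y b -> Y c -> B j a r b -> B j b s c -> B j a (r + s) c.
Hypothesis Brefl : forall j a, Y a -> B j a 0 a.
Hypothesis Bmono : forall j a b r s, Y a -> Y b -> r <= s -> B j a r b -> B j a s b.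

Definition ball_upto (K : nat) (x : V) (r : R) (y : V) : Prop := forall j, (j <= K)%nat -> B j x r y.
Definition bconv (u : nat -> V) (x : V) : Prop :=
  forall j r, 0 < r -> exists N, forall n, (N <= n)%nat -> B j x r (u n).
Definition bclosed (Cs : V -> Prop) : Prop :=
  forall u x, (forall n, Y (u n)) -> (forall n, Cs (u n)) -> Y x -> bconv u x -> Cs x.

Hypothesis Bcomplete : forall u, (forall n, Y (u n)) ->
  (forall j r, 0 < r -> exists N, forall m n, (N <= m)%nat -> (N <= n)%nat -> B j (u m) r (u n)) ->
  exists x, Y x /\ bconv u x.

Lemma bclosed_compl_ball Cs y : bclosed Cs -> Y y -> ~ Cs y ->
  exists K r, 0 < r /\ forall z, Y z -> ball_upto K y r z -> ~ Cs z.
Proof.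
  intros Hc Hy Hn. apply NNPP. intros Hno.
  assert (H : forall n, exists z, Y z /\ ball_upto n y (/ INR (S n)) z /\ Cs z).
  { intros n. apply NNPP. intros Hz. apply Hno. exists n, (/ INR (S n)).
    split; [apply inv_INR_S_pos|]. intros z Yz Bz Cz. apply Hz. exists z; auto. }
  destruct (choice _ H) as [u Hu].
  apply Hn, (Hc u y); try (intros; apply Hu); auto.
  intros j r Hr. destruct (inv_INR_S_eventually_le r Hr) as [M HM].
  exists (max j M). intros n Hn'. destruct (Hu n) as [Yn [Bn _]].
  apply Bmono with (/ INR (S n)); auto. apply HM; lia. apply Bn; lia.
Qed.

Lemma baire_shrink (Cs : V -> Prop) (m : nat) x K r : bclosed Cs -> Y x -> 0 < r ->
  (exists y, Y y /\ ball_upto K x (r / 2) y /\ ~ Cs y) ->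
  exists x' K' r', Y x' /\ 0 < r' /\ (K <= K')%nat /\ (m <= K')%nat /\ r' <= r / 2 /\
    r' <= / INR (S m) /\ ball_upto K x (r / 2) x' /\
    (forall z, Y z -> ball_upto K' x' (2 * r') z -> ~ Cs z).
Proof.
  intros Hcl Hx Hr [y [Yy [By Cy]]].
  destruct (bclosed_compl_ball Cs y Hcl Yy Cy) as [K0 [r0 [Hr0 Hop]]].
  pose proof (inv_INR_S_pos m) as Hi.
  set (r' := Rmin (Rmin (r0 / 2) (r / 2)) (/ INR (S m))).
  assert (H1 : r' <= Rmin (r0 / 2) (r / 2)) by apply Rmin_l.
  assert (H2 : Rmin (r0 / 2) (r / 2) <= r0 / 2) by apply Rmin_l.
  assert (H3 : Rmin (r0 / 2) (r / 2) <= r / 2) by apply Rmin_r.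
  exists y, (max (max K0 K) m), r'.
  repeat split; auto; try lia; try lra.
  - unfold r'. repeat apply Rmin_glb_lt; lra.
  - apply Rmin_r.
  - intros z Yz Bz. apply (Hop z Yz). intros j Hj.
    apply Bmono with (2 * r'); auto; [lra|]. apply Bz. lia.
Qed.

Section Nested.
Variables (x : nat -> V) (K : nat -> nat) (r : nat -> R).
Hypothesis Yx : forall m, Y (x m).
Hypothesis r_pos : forall m, 0 < r m.
Hypothesis K_mono : forall m, (K m <= K (S m))%nat.
Hypothesis r_halves : forall m, r (S m) <= r m / 2.
Hypothesis x_nested : forall m, ball_upto (K m) (x m) (r m / 2) (x (S m)).

Lemma nested_balls_contained m n j : (m <= n)%nat -> (j <= K m)%nat -> B j (x m) (r m) (x n).
Proof.
  intros Hmn Hj. replace n with (m + (n - m))%nat by lia. generalize (n - m)%nat as d.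
  assert (Kd : forall d, (K m <= K (m + d))%nat).
  { induction d; [rewrite Nat.add_0_r; lia|]. replace (m + S d)%nat with (S (m + d)) by lia.
    specialize (K_mono (m + d)). lia. }
  assert (Tel : forall d, B j (x m) (r m - r (m + d)%nat) (x (m + d)%nat)).
  { induction d.
    - rewrite Nat.add_0_r, Rminus_diag. auto.
    - replace (m + S d)%nat with (S (m + d)) by lia.
      apply Bmono with ((r m - r (m + d)%nat) + r (m + d)%nat / 2); auto.
      { specialize (r_halves (m + d)%nat). lra. }
      apply Btri with (x (m + d)%nat); auto. apply x_nested. specialize (Kd d). lia. }
  intros d. apply Bmono with (r m - r (m + d)%nat); auto.
  specialize (r_pos (m + d)%nat). lra.
Qed.

Hypothesis K_large : forall m, (m <= K (S m))%nat.
Hypothesis r_small : forall m, r (S m) <= / INR (S m).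

Lemma nested_balls_cauchy j e : 0 < e ->
  exists N, forall a b, (N <= a)%nat -> (N <= b)%nat -> B j (x a) e (x b).
Proof.
  intros He. destruct (inv_INR_S_eventually_le (e / 2) ltac:(lra)) as [M HM].
  set (N := S (max j M)). exists N. intros a b Ha Hb.
  assert (HjN : (j <= K N)%nat) by (specialize (K_large (max j M)); unfold N; lia).
  assert (HrN : r N <= e / 2).
  { eapply Rle_trans; [apply r_small|]. apply HM. lia. }
  apply Bmono with (r N + r N); auto; [lra|].
  apply Btri with (x N); auto.
  - apply Bsym; auto. apply nested_balls_contained; auto.
  - apply nested_balls_contained; auto.
Qed.

End Nested.

Record ball_state := BallState { bs_center : V; bs_level : nat; bs_radius : R }.

Theorem baire (Cs : nat -> V -> Prop) : (exists y0, Y y0) -> (forall m, bclosed (Cs m)) ->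
  (forall x, Y x -> exists m, Cs m x) ->
  exists m x K r, 0 < r /\ Y x /\ forall y, Y y -> ball_upto K x r y -> Cs m y.
Proof.
  intros [y0 Hy0] Hcl Hcov. apply NNPP. intros Hno.
  set (valid := fun s => Y (bs_center s) /\ 0 < bs_radius s).
  set (step := fun m s s' => (bs_level s <= bs_level s')%nat /\ (m <= bs_level s')%nat /\
     bs_radius s' <= bs_radius s / 2 /\ bs_radius s' <= / INR (S m) /\
     ball_upto (bs_level s) (bs_center s) (bs_radius s / 2) (bs_center s') /\
     (forall z, Y z -> ball_upto (bs_level s') (bs_center s') (2 * bs_radius s') z -> ~ Cs m z)).
  destruct (dependent_choice_nat valid step (BallState y0 0 1)) as [s Hs].
  - split; simpl; auto; lra.
  - intros m [x K r] [Hx Hr]. simpl in *.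
    destruct (baire_shrink (Cs m) m x K r (Hcl m) Hx Hr) as (x' & K' & r' & Yx' & Hr' & Hstep).
    + apply NNPP. intros Hn. apply Hno. exists m, x, K, (r / 2).
      repeat split; auto; [lra|]. intros y Yy By. apply NNPP. intros Cy. apply Hn. eauto.
    + exists (BallState x' K' r'). split; [split|]; auto.
  - set (x := fun m => bs_center (s m)). set (K := fun m => bs_level (s m)).
    set (r := fun m => bs_radius (s m)).
    assert (Yx : forall m, Y (x m)) by (intros m; apply (Hs m)).
    assert (r_pos : forall m, 0 < r m) by (intros m; apply (Hs m)).
    assert (Inv : forall m, (K m <= K (S m))%nat /\ (m <= K (S m))%nat /\ r (S m) <= r m / 2 /\
       r (S m) <= / INR (S m) /\ ball_upto (K m) (x m) (r m / 2) (x (S m)) /\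
       (forall z, Y z -> ball_upto (K (S m)) (x (S m)) (2 * r (S m)) z -> ~ Cs m z))
      by (intros m; apply (Hs m)).
    destruct (Bcomplete x Yx) as [xs [Yxs Hconv]].
    { intros j e He. apply (nested_balls_cauchy x K r); auto; intros m; apply Inv. }
    destruct (Hcov xs Yxs) as [m Hm].
    apply (proj2 (proj2 (proj2 (proj2 (proj2 (Inv m)))))) with xs; auto.
    intros j Hj. destruct (Hconv j (r (S m)) (r_pos (S m))) as [N HN].
    set (n := max N (S m)).
    apply Bmono with (r (S m) + r (S m)); auto; [lra|].
    apply Btri with (x n); auto.
    + apply (nested_balls_contained x K r); auto; try (intros; apply Inv). unfold n; lia.
    + apply Bsym; auto. apply HN. unfold n; lia.
Qed.

End Baire.

Section UniformBoundedness.
Variables (X : cseq -> Prop) (sn : nat -> cseq -> R).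
Hypothesis HFK : is_FK X sn.

Let XS := FK_subspace X sn HFK.

Definition sn_ball (j : nat) (a : cseq) (r : R) (b : cseq) : Prop := sn j (ssub b a) <= r.

Lemma seq_conv_bconv u x : (forall n, X (u n)) -> X x ->
  (seq_conv sn u x <-> bconv cseq sn_ball u x).
Proof.
  intros Xu Xx. split.
  - intros Hc j r Hr. destruct (seq_conv_sn_lt X sn HFK u x j r Xu Xx Hc Hr) as [N HN].
    exists N. intros n Hn. left. auto.
  - intros Hb k eps He. destruct (Hb k (eps / 2) ltac:(lra)) as [N HN]. exists N. intros n Hn.
    specialize (HN n Hn). unfold sn_ball, R_dist in *. rewrite Rminus_0_r.
    rewrite Rabs_right by (apply Rle_ge, (sn_sub_nonneg X sn HFK); auto). lra.
Qed.

Lemma FK_baire (Cs : nat -> cseq -> Prop) :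
  (forall m u x, (forall n, X (u n)) -> (forall n, Cs m (u n)) -> X x -> seq_conv sn u x -> Cs m x) ->
  (forall x, X x -> exists m, Cs m x) ->
  exists m x0 K r, 0 < r /\ X x0 /\
    forall y, X y -> (forall j, (j <= K)%nat -> sn j (ssub y x0) <= r) -> Cs m y.
Proof.
  intros Hcl Hcov.
  destruct (baire cseq X sn_ball) with (Cs := Cs) as (m & x0 & K & r & Hr & Hx0 & Hball); auto;
    unfold sn_ball in *.
  - intros j a b r Ha Hb H. rewrite (sn_sub_sym X sn HFK); auto.
  - intros j a b c r s Ha Hb Hc H1 H2. pose proof (sn_sub_triangle X sn HFK j c b a Hc Hb Ha). lra.
  - intros j a Ha. rewrite (sn_self X sn HFK). lra.
  - intros j a b r s _ _ H1 H2. lra.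
  - intros u Xu Hc. destruct (FK_complete X sn HFK u Xu) as [x [Xx Hx]].
    + intros k eps He. destruct (Hc k (eps / 2) ltac:(lra)) as [N HN]. exists N. intros m n Hm Hn.
      specialize (HN n m Hn Hm). lra.
    + exists x. split; auto. apply seq_conv_bconv; auto.
  - exists szero. apply subspace_zero; auto.
  - intros m0 u x Xu Cu Xx Hb. apply (Hcl m0 u x); auto. apply seq_conv_bconv; auto.
  - exists m, x0, K, r. repeat split; auto.
Qed.

Lemma seminorm_ball_dominated (rho : cseq -> R) x0 K r M : is_seminorm X rho -> X x0 -> 0 < r ->
  (forall y, X y -> (forall j, (j <= K)%nat -> sn j (ssub y x0) <= r) -> rho y <= M) ->
  forall a, X a -> rho a <= (2 * M / r) * sn_upto sn K a.
Proof.
  intros Hrho Hx0 Hr Hball.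
  assert (Hsmall : forall a, X a -> (forall j, (j <= K)%nat -> sn j a <= r) -> rho a <= 2 * M).
  { intros a Ha Hj.
    assert (Hy : X (sadd x0 a)) by (apply subspace_add; auto).
    assert (Ey : ssub (sadd x0 a) x0 = a) by (cseq_ring; ring).
    assert (H1 : rho (sadd x0 a) <= M) by (apply Hball; auto; intros; rewrite Ey; auto).
    assert (H2 : rho x0 <= M).
    { apply Hball; auto. intros j _. rewrite (sn_self X sn HFK). lra. }
    pose proof (seminorm_sub_le X XS rho Hrho (sadd x0 a) x0 Hy Hx0). rewrite Ey in H. lra. }
  assert (HM : 0 <= M).
  { pose proof (seminorm_nonneg X XS rho Hrho x0 Hx0). pose proof (Hball x0 Hx0).
    assert (rho x0 <= M); [|lra]. apply H0. intros j _. rewrite (sn_self X sn HFK). lra. }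
  intros a Ha. set (s := sn_upto sn K a).
  assert (Hs : 0 <= s) by apply (seminorm_nonneg X XS _ (sn_upto_seminorm X sn HFK K) a Ha).
  assert (Hscale : forall t, 0 < t -> (forall j, (j <= K)%nat -> t * sn j a <= r) -> t * rho a <= 2 * M).
  { intros t Ht Hj. rewrite <- (seminorm_rscal X rho Hrho) by (auto; lra).
    apply Hsmall; [apply subspace_scal; auto|]. intros j Hjk.
    rewrite (seminorm_rscal X _ (FK_seminorm X sn HFK j)) by (auto; lra). auto. }
  destruct (Rle_lt_or_eq_dec 0 s Hs) as [Hsp|Hs0].
  - assert (Ht : 0 < r / s) by (apply Rdiv_lt_0_compat; auto).
    assert (K2 : r / s * rho a <= 2 * M).
    { apply Hscale; auto. intros j Hj. pose proof (sn_upto_ge X sn HFK K a j Ha Hj). fold s in H.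
      apply Rle_trans with (r / s * s); [apply Rmult_le_compat_l; lra | right; field; lra]. }
    apply Rmult_le_reg_l with (r / s); auto.
    replace (r / s * (2 * M / r * s)) with (2 * M) by (field; lra). auto.
  - rewrite <- Hs0, Rmult_0_r. apply Rnot_lt_le. intros Hpos.
    assert (Ht : 0 < (2 * M + 1) / rho a) by (apply Rdiv_lt_0_compat; lra).
    assert (K2 : (2 * M + 1) / rho a * rho a <= 2 * M).
    { apply Hscale; auto. intros j Hj. pose proof (sn_upto_ge X sn HFK K a j Ha Hj). fold s in H.
      pose proof (sn_nonneg X sn HFK j a Ha). replace (sn j a) with 0 by lra. lra. }
    replace ((2 * M + 1) / rho a * rho a) with (2 * M + 1) in K2 by (field; lra). lra.
Qed.

Theorem uniform_boundedness (I : Type) (rho : I -> cseq -> R) :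
  (forall i, is_seminorm X (rho i)) ->
  (forall i w, (forall l, X (w l)) -> seq_conv sn w szero -> Un_cv (fun l => rho i (w l)) 0) ->
  (forall a, X a -> exists M, forall i, rho i a <= M) ->
  exists K Cst, 0 <= Cst /\ forall i a, X a -> rho i a <= Cst * sn_upto sn K a.
Proof.
  intros Hrho Hcont Hbd.
  set (Cs := fun (m : nat) a => forall i, rho i a <= INR m).
  destruct (FK_baire Cs) as (m & x0 & K & r & Hr & Hx0 & Hball).
  - intros m u x Xu Cu Xx Hc i.
    assert (Hw : Un_cv (fun l => rho i (ssub x (u l))) 0).
    { apply Hcont; [intros; apply subspace_sub; auto|]. intros k.
      eapply Un_cv_ext; [|apply (Hc k)]. intros n. cbv beta.
      replace (ssub (ssub x (u n)) szero) with (ssub x (u n)) by (cseq_ring; ring).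
      apply (sn_sub_sym X sn HFK); auto. }
    apply Rnot_lt_le. intros Hlt.
    destruct (Hw (rho i x - INR m) ltac:(lra)) as [N HN]. specialize (HN N (le_n _)).
    unfold R_dist in HN. rewrite Rminus_0_r in HN. pose proof (Rle_abs (rho i (ssub x (u N)))).
    pose proof (seminorm_le_sub X XS _ (Hrho i) x (u N) Xx (Xu N)). pose proof (Cu N i). lra.
  - intros a Xa. destruct (Hbd a Xa) as [M HM]. destruct (INR_unbounded M) as [m Hm].
    exists m. intros i. specialize (HM i). lra.
  - exists K, (2 * INR m / r). split.
    + apply Rmult_le_pos; [pose proof (pos_INR m); lra | apply Rlt_le, Rinv_0_lt_compat; auto].
    + intros i. apply (seminorm_ball_dominated (rho i) x0 K r); auto.
      intros y Xy Hy. apply (Hball y Xy Hy).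
Qed.

End UniformBoundedness.

Lemma zorn_preorder (T : Type) (t0 : T) (Rel : T -> T -> Prop) :
  (forall t, Rel t t) -> (forall r s t, Rel r s -> Rel s t -> Rel r t) ->
  (forall A : T -> Prop, (forall s t, A s -> A t -> Rel s t \/ Rel t s) ->
     exists t, forall s, A s -> Rel s t) ->
  exists t, forall s, Rel t s -> Rel s t.
Proof.
  intros Hr Ht Hc.
  assert (E : forall a b, is_true (boolp.asbool (Rel a b)) <-> Rel a b).
  { intros a b. destruct (boolp.asboolP (Rel a b)); split; auto; discriminate. }
  destruct (@classical_sets.ZL_preorder T t0 (fun a b => boolp.asbool (Rel a b))) as [t Htm].
  - intros t. apply E. auto.
  - intros r s t H1 H2. apply E. apply E in H1. apply E in H2. eauto.
  - intros A HA. destruct (Hc A) as [t Hts].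
    + intros s t As At. destruct (HA s t As At) as [h|h]; [left|right]; apply E; auto.
    + exists t. intros s As. apply E. auto.
  - exists t. intros s Hs. apply E. apply Htm. apply E. auto.
Qed.

Section RealHahnBanach.
Variable X : cseq -> Prop.
Hypothesis HX : is_subspace X.
Variable p : cseq -> R.
Hypothesis Hp : is_seminorm X p.

Definition dominated_partial (D : cseq -> Prop) (h : cseq -> R) : Prop :=
  (forall u, D u -> X u) /\ D szero /\ (forall a b, D a -> D b -> D (sadd a b)) /\
  (forall t a, D a -> D (sscal (RtoC t) a)) /\
  (forall a b, D a -> D b -> h (sadd a b) = h a + h b) /\
  (forall t a, D a -> h (sscal (RtoC t) a) = t * h a) /\
  (forall a, D a -> h a <= p a).

Definition extends (e e' : (cseq -> Prop) * (cseq -> R)) : Prop :=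
  (forall u, fst e u -> fst e' u) /\ (forall u, fst e u -> snd e' u = snd e u).

Lemma extends_refl e : extends e e.
Proof. split; auto. Qed.

Lemma extends_trans e1 e2 e3 : extends e1 e2 -> extends e2 e3 -> extends e1 e3.
Proof. intros [A1 B1] [A2 B2]. split; auto. intros u Hu. rewrite B2; auto. Qed.

Lemma decomposition_unique (D : cseq -> Prop) v d d' a a' :
  (forall a b, D a -> D b -> D (sadd a b)) -> (forall t a, D a -> D (sscal (RtoC t) a)) ->
  ~ D v -> D d -> D d' -> sadd d (sscal (RtoC a) v) = sadd d' (sscal (RtoC a') v) ->
  d = d' /\ a = a'.
Proof.
  intros Dadd Dscal Dv Dd Dd' E.
  assert (Ej : forall j, Cplus (d j) (Cmult (RtoC a) (v j)) = Cplus (d' j) (Cmult (RtoC a') (v j)))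
    by (intros j; apply (f_equal (fun x => x j)) in E; exact E).
  destruct (Req_dec a a') as [<-|ne].
  - split; auto. apply cseq_ext. intros j. specialize (Ej j).
    replace (d j) with (Cminus (Cplus (d j) (Cmult (RtoC a) (v j))) (Cmult (RtoC a) (v j))) by ring.
    rewrite Ej. ring.
  - exfalso. apply Dv.
    replace v with (sadd (sscal (RtoC (/ (a - a'))) d') (sscal (RtoC (- / (a - a'))) d));
      [apply Dadd; apply Dscal; auto|].
    apply cseq_ext. intros j. specialize (Ej j). unfold sadd, sscal.
    assert (Hne : Cminus (RtoC a) (RtoC a') <> RtoC 0) by (rewrite <- RtoC_minus; apply RtoC_neq0; lra).
    rewrite RtoC_opp, RtoC_inv, RtoC_minus by lra.
    replace (d' j) with (Cplus (Cplus (d j) (Cmult (RtoC a) (v j))) (Copp (Cmult (RtoC a') (v j))))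
      by (rewrite Ej; ring).
    field. auto.
Qed.

Section OneStep.
Variables (D : cseq -> Prop) (h : cseq -> R) (v : cseq).
Hypothesis HD : dominated_partial D h.
Hypothesis Xv : X v.

Lemma extension_constant : exists c, forall d, D d -> h d - p (ssub d v) <= c /\ c <= p (sadd d v) - h d.
Proof.
  destruct HD as (DX & D0 & Dadd & _ & hadd & _ & hp).
  assert (key : forall d1 d2, D d1 -> D d2 -> h d1 - p (ssub d1 v) <= p (sadd d2 v) - h d2).
  { intros d1 d2 D1 D2.
    assert (h (sadd d1 d2) <= p (sadd (ssub d1 v) (sadd d2 v))).
    { replace (sadd (ssub d1 v) (sadd d2 v)) with (sadd d1 d2) by (cseq_ring; ring). auto. }
    pose proof (seminorm_triangle X p Hp (ssub d1 v) (sadd d2 v)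
                  ltac:(apply subspace_sub; auto) ltac:(apply subspace_add; auto)).
    rewrite hadd in H; auto. lra. }
  set (S := fun r => exists d, D d /\ r = h d - p (ssub d v)).
  destruct (completeness S) as [c [Hub Hlub]].
  - exists (p (sadd szero v) - h szero). intros r [d [Dd ->]]. apply key; auto.
  - exists (h szero - p (ssub szero v)), szero. auto.
  - exists c. intros d Dd. split.
    + apply Hub. exists d. auto.
    + apply Hlub. intros r [d1 [D1 ->]]. apply key; auto.
Qed.

Lemma extension_dominated c :
  (forall d, D d -> h d - p (ssub d v) <= c /\ c <= p (sadd d v) - h d) ->
  forall d a, D d -> h d + a * c <= p (sadd d (sscal (RtoC a) v)).
Proof.
  intros Hc d a Dd. destruct HD as (DX & _ & _ & Dscal & _ & hscal & _).
  destruct (Rtotal_order a 0) as [Hn|[H0|Hpos]].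
  - set (b := - a). assert (Hb : 0 < b) by (unfold b; lra).
    assert (E : sadd d (sscal (RtoC a) v) = sscal (RtoC b) (ssub (sscal (RtoC (/ b)) d) v)).
    { cseq_ring. rewrite RtoC_inv by lra. unfold b. rewrite RtoC_opp. field.
      apply RtoC_neq0. lra. }
    rewrite E, (seminorm_rscal X p Hp) by (try lra; apply subspace_sub, Xv; auto; apply subspace_scal; auto).
    destruct (Hc _ (Dscal (/ b) d Dd)) as [Hc1 _]. rewrite hscal in Hc1 by auto.
    assert (Hc2 : b * (/ b * h d - p (ssub (sscal (RtoC (/ b)) d) v)) <= b * c)
      by (apply Rmult_le_compat_l; lra).
    replace (b * (/ b * h d - p (ssub (sscal (RtoC (/ b)) d) v)))
      with (h d - b * p (ssub (sscal (RtoC (/ b)) d) v)) in Hc2 by (field; lra).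
    unfold b in *. lra.
  - subst a. replace (sadd d (sscal (RtoC 0) v)) with d by (cseq_ring; ring).
    rewrite Rmult_0_l, Rplus_0_r. apply HD; auto.
  - assert (E : sadd d (sscal (RtoC a) v) = sscal (RtoC a) (sadd (sscal (RtoC (/ a)) d) v)).
    { cseq_ring. rewrite RtoC_inv by lra. field. apply RtoC_neq0. lra. }
    rewrite E, (seminorm_rscal X p Hp) by (try lra; apply subspace_add, Xv; auto; apply subspace_scal; auto).
    destruct (Hc _ (Dscal (/ a) d Dd)) as [_ Hc1]. rewrite hscal in Hc1 by auto.
    assert (Hc2 : a * c <= a * (p (sadd (sscal (RtoC (/ a)) d) v) - / a * h d))
      by (apply Rmult_le_compat_l; lra).
    replace (a * (p (sadd (sscal (RtoC (/ a)) d) v) - / a * h d))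
      with (a * p (sadd (sscal (RtoC (/ a)) d) v) - h d) in Hc2 by (field; lra).
    lra.
Qed.

Lemma dominated_partial_step : ~ D v ->
  exists D' h', dominated_partial D' h' /\ extends (D, h) (D', h') /\ D' v.
Proof.
  intros Dv. destruct (extension_constant) as [c Hc].
  pose proof HD as (DX & D0 & Dadd & Dscal & hadd & hscal & hp).
  set (D' := fun u => exists d a, D d /\ u = sadd d (sscal (RtoC a) v)).
  assert (Hrep : forall u, D' u ->
            {da : cseq * R | D (fst da) /\ u = sadd (fst da) (sscal (RtoC (snd da)) v)}).
  { intros u Hu. apply constructive_indefinite_description.
    destruct Hu as [d [a Hda]]. exists (d, a). exact Hda. }
  set (h' := fun u => match excluded_middle_informative (D' u) with
        | left H => let da := proj1_sig (Hrep u H) in h (fst da) + snd da * c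
        | right _ => 0 end).
  assert (hspec : forall d a, D d -> h' (sadd d (sscal (RtoC a) v)) = h d + a * c).
  { intros d a Dd. unfold h'. destruct (excluded_middle_informative _) as [H|H].
    - destruct (Hrep _ H) as [[d1 a1] [D1 E1]]. simpl in *.
      destruct (decomposition_unique D v d d1 a a1 Dadd Dscal Dv Dd D1 E1) as [-> ->]. auto.
    - exfalso. apply H. exists d, a. auto. }
  exists D', h'. split; [|split].
  - split; [|split; [|split; [|split; [|split; [|split]]]]].
    + intros u [d [a [Dd ->]]]. apply subspace_add; auto. apply subspace_scal; auto.
    + exists szero, 0. split; auto. cseq_ring. ring.
    + intros u w [d1 [a1 [D1 ->]]] [d2 [a2 [D2 ->]]].
      exists (sadd d1 d2), (a1 + a2). split; auto. cseq_ring. ring.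
    + intros t u [d [a [Dd ->]]]. exists (sscal (RtoC t) d), (t * a). split; auto. cseq_ring. ring.
    + intros u w [d1 [a1 [D1 ->]]] [d2 [a2 [D2 ->]]].
      replace (sadd (sadd d1 (sscal (RtoC a1) v)) (sadd d2 (sscal (RtoC a2) v)))
        with (sadd (sadd d1 d2) (sscal (RtoC (a1 + a2)) v)) by (cseq_ring; ring).
      rewrite !hspec, hadd; auto. ring.
    + intros t u [d [a [Dd ->]]].
      replace (sscal (RtoC t) (sadd d (sscal (RtoC a) v)))
        with (sadd (sscal (RtoC t) d) (sscal (RtoC (t * a)) v)) by (cseq_ring; ring).
      rewrite !hspec, hscal; auto. ring.
    + intros u [d [a [Dd ->]]]. rewrite hspec; auto. apply extension_dominated; auto.
  - split; simpl.
    + intros u Du. exists u, 0. split; auto. cseq_ring. ring.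
    + intros u Du. replace u with (sadd u (sscal (RtoC 0) v)) at 1 by (cseq_ring; ring).
      rewrite hspec; auto. ring.
  - exists szero, 1. split; auto. cseq_ring. ring.
Qed.

End OneStep.

Definition dominated_extension (e0 : (cseq -> Prop) * (cseq -> R)) : Type :=
  {e : (cseq -> Prop) * (cseq -> R) | dominated_partial (fst e) (snd e) /\ extends e0 e}.

Lemma chain_upper_bound e0 (A : dominated_extension e0 -> Prop) (t1 : dominated_extension e0) :
  A t1 -> (forall s t, A s -> A t -> extends (proj1_sig s) (proj1_sig t) \/ extends (proj1_sig t) (proj1_sig s)) ->
  exists t : dominated_extension e0, forall s, A s -> extends (proj1_sig s) (proj1_sig t).
Proof.
  intros At1 HA.
  set (Ds := fun u => exists t, A t /\ fst (proj1_sig t) u).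
  assert (Hwit : forall u, Ds u -> {t | A t /\ fst (proj1_sig t) u})
    by (intros u Hu; apply constructive_indefinite_description; exact Hu).
  set (hs := fun u => match excluded_middle_informative (Ds u) with
                      | left H => snd (proj1_sig (proj1_sig (Hwit u H))) u
                      | right _ => 0 end).
  assert (hspec : forall t u, A t -> fst (proj1_sig t) u -> hs u = snd (proj1_sig t) u).
  { intros t u At Hu. unfold hs. destruct (excluded_middle_informative _) as [H|H].
    - destruct (Hwit u H) as [t' [At' Hu']]. simpl.
      destruct (HA t t' At At') as [[_ E2]|[_ E2]]; rewrite E2; auto.
    - exfalso. apply H. exists t. auto. }
  assert (two : forall t1 t2 u w, A t1 -> A t2 -> fst (proj1_sig t1) u -> fst (proj1_sig t2) w ->
            exists t, A t /\ fst (proj1_sig t) u /\ fst (proj1_sig t) w).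
  { intros s1 s2 u w A1 A2 H1 H2.
    destruct (HA s1 s2 A1 A2) as [[E1 _]|[E1 _]]; [exists s2|exists s1]; auto. }
  assert (VV : forall t : dominated_extension e0, dominated_partial (fst (proj1_sig t)) (snd (proj1_sig t)))
    by (intros t; apply (proj1 (proj2_sig t))).
  assert (Vs : dominated_partial Ds hs /\ extends e0 (Ds, hs)).
  { split; [split; [|split; [|split; [|split; [|split; [|split]]]]]|split]; cbn [fst snd].
    - intros u [t [At Hu]]. apply (VV t); auto.
    - exists t1. split; auto. apply (VV t1).
    - intros a b [s1 [A1 H1]] [s2 [A2 H2]]. destruct (two s1 s2 a b A1 A2 H1 H2) as [t [At [Ha Hb]]].
      exists t. split; auto. apply (VV t); auto.
    - intros r a [t [At Ha]]. exists t. split; auto. apply (VV t); auto.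
    - intros a b [s1 [A1 H1]] [s2 [A2 H2]]. destruct (two s1 s2 a b A1 A2 H1 H2) as [t [At [Ha Hb]]].
      destruct (VV t) as (_ & _ & vadd & _ & vhadd & _). rewrite !(hspec t); auto.
    - intros r a [t [At Ha]]. destruct (VV t) as (_ & _ & _ & vscal & _ & vhscal & _).
      rewrite !(hspec t); auto.
    - intros a [t [At Ha]]. rewrite (hspec t); auto. apply (VV t); auto.
    - intros u Hu. exists t1. split; auto. apply (proj2 (proj2_sig t1)); auto.
    - intros u Hu. destruct (proj2 (proj2_sig t1)) as [E1 E2]. rewrite (hspec t1); auto. }
  exists (exist _ (Ds, hs) Vs). intros s As. split; simpl.
  - intros u Hu. exists s. auto.
  - intros u Hu. apply hspec; auto.
Qed.

Theorem real_hahn_banach (D0 : cseq -> Prop) (h0 : cseq -> R) : dominated_partial D0 h0 ->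
  exists h, (forall a b, X a -> X b -> h (sadd a b) = h a + h b) /\
            (forall t a, X a -> h (sscal (RtoC t) a) = t * h a) /\
            (forall a, X a -> h a <= p a) /\ (forall u, D0 u -> h u = h0 u).
Proof.
  intros V0.
  set (t0 := exist _ (D0, h0) (conj V0 (extends_refl _)) : dominated_extension (D0, h0)).
  destruct (zorn_preorder _ t0 (fun s t => extends (proj1_sig s) (proj1_sig t))) as [[[D h] [Vm Em]] Htm].
  - intros; apply extends_refl.
  - intros r s t; apply extends_trans.
  - intros A HA. destruct (classic (exists t, A t)) as [[t1 At1]|Hne].
    + apply (chain_upper_bound _ A t1); auto.
    + exists t0. intros s As. exfalso; eauto.
  - simpl in Htm.
    assert (full : forall v, X v -> D v).
    { intros v Xv. apply NNPP. intros Dv.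
      destruct (dominated_partial_step D h v Vm Xv Dv) as (D' & h' & V' & E' & Hv').
      specialize (Htm (exist _ (D', h') (conj V' (extends_trans _ _ _ Em E')))).
      apply Dv, (proj1 (Htm E')), Hv'. }
    destruct Vm as (_ & _ & _ & _ & hadd & hscal & hp). destruct Em as [_ E2]. simpl in *.
    exists h. repeat split; auto.
Qed.

End RealHahnBanach.

Ltac cpair := unfold Cmult, Cplus, Copp, Cminus, RtoC, Ci, Re, Im, fst, snd in *; simpl;
  first [ring | f_equal; ring].

Section Complexify.
Variable X : cseq -> Prop.
Hypothesis HX : is_subspace X.
Variable h : cseq -> R.
Hypothesis hadd : forall a b, X a -> X b -> h (sadd a b) = h a + h b.
Hypothesis hscal : forall t a, X a -> h (sscal (RtoC t) a) = t * h a.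

(* For complex-linear f, Im (f u) = - Re (f (i u)): f is recovered from its real part h. *)
Definition complexify (u : cseq) : C := (h u, - h (sscal Ci u)).

Lemma complexify_linear : linear_on X complexify.
Proof.
  assert (XCi : forall u, X u -> X (sscal Ci u)) by (intros; apply subspace_scal; auto).
  split.
  - intros a b Xa Xb. unfold complexify.
    replace (sscal Ci (sadd a b)) with (sadd (sscal Ci a) (sscal Ci b)) by (cseq_ring; ring).
    rewrite !hadd by auto. cpair.
  - intros [ca cb] a Xa.
    assert (E1 : sscal (ca, cb) a = sadd (sscal (RtoC ca) a) (sscal (RtoC cb) (sscal Ci a))).
    { apply cseq_ext; intros j. unfold sadd, sscal. destruct (a j). cpair. }
    assert (E2 : sscal Ci (sscal (ca, cb) a) = sadd (sscal (RtoC ca) (sscal Ci a)) (sscal (RtoC (- cb)) a)).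
    { apply cseq_ext; intros j. unfold sadd, sscal. destruct (a j). cpair. }
    unfold complexify. rewrite E2, E1.
    rewrite !hadd, !hscal; try solve [repeat apply subspace_scal; auto]. cpair.
Qed.

Lemma complexify_bound (p : cseq -> R) : is_seminorm X p -> (forall a, X a -> h a <= p a) ->
  forall u, X u -> Cmod (complexify u) <= p u.
Proof.
  intros Hp hp u Xu. set (z := complexify u).
  destruct (Req_dec (Cmod z) 0) as [E|E].
  - rewrite E. apply (seminorm_nonneg X HX p Hp u Xu).
  - assert (Hm : 0 < Cmod z) by (pose proof (Cmod_ge_0 z); lra).
    assert (Hn : RtoC (Cmod z) <> RtoC 0) by (apply RtoC_neq0; lra).
    set (w := Cdiv (Cconj z) (RtoC (Cmod z))).
    assert (Hw : Cmod w = 1).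
    { unfold w. rewrite Cmod_div, Cmod_conj, Cmod_RtoC_nonneg by (auto; lra). field. lra. }
    assert (Hwz : Cmult w z = RtoC (Cmod z)).
    { unfold w, Cdiv. replace (Cmult (Cmult (Cconj z) (Cinv (RtoC (Cmod z)))) z)
        with (Cmult (Cmult z (Cconj z)) (Cinv (RtoC (Cmod z)))) by ring.
      rewrite <- Cmod2_conj, RtoC_pow. field. auto. }
    assert (Hlin : complexify (sscal w u) = RtoC (Cmod z)).
    { rewrite <- Hwz. destruct complexify_linear as [_ Hs]. apply Hs; auto. }
    apply (f_equal Re) in Hlin. simpl in Hlin. rewrite <- Hlin.
    rewrite <- (Rmult_1_l (p u)), <- Hw, <- (seminorm_scal X p Hp) by auto.
    apply hp, subspace_scal; auto.
Qed.

End Complexify.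

Theorem complex_hahn_banach (X : cseq -> Prop) (p : cseq -> R) (Y : cseq -> Prop) (g : cseq -> C) :
  is_subspace X -> is_seminorm X p -> is_subspace Y -> (forall u, Y u -> X u) -> linear_on Y g ->
  (forall u, Y u -> Cmod (g u) <= p u) ->
  exists f, linear_on X f /\ (forall u, Y u -> f u = g u) /\ (forall u, X u -> Cmod (f u) <= p u).
Proof.
  intros HX Hp HY YX [gadd gscal] gp.
  destruct (real_hahn_banach X HX p Hp Y (fun u => Re (g u))) as (h & hadd & hscal & hp & hext).
  { split; [|split; [|split; [|split; [|split; [|split]]]]].
    - exact YX.
    - apply subspace_zero; auto.
    - apply subspace_add; auto.
    - intros t a Ya. apply subspace_scal; auto.
    - intros a b Ya Yb. rewrite gadd; auto.
    - intros t a Ya. rewrite gscal by auto. destruct (g a). cpair.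
    - intros a Ya. eapply Rle_trans; [apply Rle_abs|]. eapply Rle_trans; [apply re_le_Cmod|]. auto. }
  exists (complexify h). split; [|split].
  - apply complexify_linear; auto.
  - intros u Yu. unfold complexify. rewrite (hext u Yu), hext by (apply subspace_scal; auto).
    rewrite gscal by auto. destruct (g u). cpair.
  - apply complexify_bound; auto.
Qed.

Lemma linear_on_limit (X : cseq -> Prop) (u : nat -> cseq -> C) (F : cseq -> C) :
  is_subspace X -> (forall n, linear_on X (u n)) -> (forall x, X x -> Ccv (fun n => u n x) (F x)) ->
  linear_on X F.
Proof.
  intros HX Hu HF. split.
  - intros a b Xa Xb. apply (Ccv_unique (fun n => u n (sadd a b))); [apply HF, subspace_add; auto|].
    apply Ccv_ext with (fun n => Cplus (u n a) (u n b)); [intros n; symmetry; apply (Hu n); auto|].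
    apply Ccv_plus; apply HF; auto.
  - intros c a Xa. apply (Ccv_unique (fun n => u n (sscal c a))); [apply HF, subspace_scal; auto|].
    apply Ccv_ext with (fun n => Cmult c (u n a)); [intros n; symmetry; apply (Hu n); auto|].
    apply Ccv_scal, HF; auto.
Qed.

Section WeaklyBounded.
Variable X : cseq -> Prop.
Hypothesis HX : is_subspace X.
Variable p : cseq -> R.
Hypothesis Hp : is_seminorm X p.

Let p_nonneg := seminorm_nonneg X HX p Hp.

Lemma norming_functional v : X v ->
  exists G, linear_on X G /\ (forall u, X u -> Cmod (G u) <= p u) /\ G v = RtoC (p v).
Proof.
  intros Xv. destruct (classic (exists j, v j <> RtoC 0)) as [[j Hj]|Hv0].
  - set (g := fun w : cseq => Cmult (Cdiv (w j) (v j)) (RtoC (p v))).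
    assert (Hspan : forall t, g (sscal t v) = Cmult t (RtoC (p v)))
      by (intros t; unfold g, sscal; field; auto).
    destruct (complex_hahn_banach X p (fun w => exists t, w = sscal t v) g) as (G & Glin & Gext & Gb);
      auto.
    + split; [|split].
      * exists (RtoC 0). cseq_ring. ring.
      * intros a b [t1 ->] [t2 ->]. exists (Cplus t1 t2). cseq_ring. ring.
      * intros c a [t ->]. exists (Cmult c t). cseq_ring. ring.
    + intros u [t ->]. apply subspace_scal; auto.
    + split; intros; unfold g, sadd, sscal; field; auto.
    + intros u [t ->]. rewrite Hspan, (seminorm_scal X p Hp), Cmod_mult, Cmod_RtoC_nonneg; auto.
      lra.
    + exists G. split; [exact Glin|split; [exact Gb|]].
      replace v with (sscal (RtoC 1) v) at 1 by (cseq_ring; ring).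
      rewrite Gext, Hspan by (exists (RtoC 1); auto). ring.
  - assert (Ev : v = szero).
    { apply cseq_ext. intros j. apply NNPP. intros Hne. apply Hv0. exists j. auto. }
    exists (fun _ => RtoC 0). repeat split; intros; try ring.
    + rewrite Cmod_0. auto.
    + rewrite Ev, (seminorm_zero X HX p Hp). auto.
Qed.

Definition p_dominated (f : cseq -> C) : Prop :=
  linear_on X f /\ exists c, 0 <= c /\ forall u, X u -> Cmod (f u) <= c * p u.

Definition dual_ball (j : nat) (f : cseq -> C) (r : R) (g : cseq -> C) : Prop :=
  forall u, X u -> Cmod (Cminus (g u) (f u)) <= r * p u.

Lemma p_dominated_complete (u : nat -> cseq -> C) : (forall n, p_dominated (u n)) ->
  (forall j r, 0 < r -> exists N, forall m n, (N <= m)%nat -> (N <= n)%nat -> dual_ball j (u m) r (u n)) ->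
  exists F, p_dominated F /\ bconv (cseq -> C) dual_ball u F.
Proof.
  intros Hu Hc.
  assert (Hpt : forall x, exists l, X x -> Ccv (fun n => u n x) l).
  { intros x. destruct (classic (X x)) as [Xx|Xx]; [|exists (RtoC 0); tauto].
    destruct (Ccv_Cauchy (fun n => u n x)) as [l Hl]; [|exists l; auto].
    intros eps He. pose proof (p_nonneg x Xx).
    destruct (Hc 0%nat (eps / (p x + 1))) as [N HN]; [apply Rdiv_lt_0_compat; lra|].
    exists N. intros m n Hm Hn. eapply Rle_lt_trans; [apply (HN n m Hn Hm x Xx)|].
    apply Rlt_le_trans with (eps / (p x + 1) * (p x + 1)); [|right; field; lra].
    apply Rmult_lt_compat_l; [apply Rdiv_lt_0_compat|]; lra. }
  destruct (choice _ Hpt) as [F HF].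
  assert (Hclose : forall j r, 0 < r -> exists N, forall n, (N <= n)%nat -> dual_ball j F r (u n)).
  { intros j r Hr. destruct (Hc j r Hr) as [N HN]. exists N. intros n Hn x Xx.
    rewrite Cmod_minus_sym. apply (Ccv_dist_le (fun m => u m x) (F x) (u n x) (r * p x) N); auto.
    intros m Hm. apply (HN n m); auto. }
  exists F. split; [split|exact Hclose].
  - apply (linear_on_limit X u F HX); auto. intros n; apply Hu.
  - destruct (Hclose 0%nat 1 Rlt_0_1) as [N HN]. destruct (Hu N) as [_ (c & Hc0 & Hb)].
    exists (c + 1). split; [lra|]. intros x Xx.
    pose proof (HN N (le_n _) x Xx). pose proof (Cmod_le_minus (F x) (u N x)).
    rewrite Cmod_minus_sym in H. pose proof (Hb x Xx). lra.
Qed.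

Lemma dual_ball_pointwise (u : nat -> cseq -> C) F : bconv (cseq -> C) dual_ball u F ->
  forall x, X x -> Ccv (fun n => u n x) (F x).
Proof.
  intros Hc x Xx eps He. pose proof (p_nonneg x Xx).
  destruct (Hc 0%nat (eps / (p x + 1))) as [N HN]; [apply Rdiv_lt_0_compat; lra|].
  exists N. intros n Hn. eapply Rle_lt_trans; [apply (HN n Hn x Xx)|].
  apply Rlt_le_trans with (eps / (p x + 1) * (p x + 1)); [|right; field; lra].
  apply Rmult_lt_compat_l; [apply Rdiv_lt_0_compat|]; lra.
Qed.

(* Testing against f0 + r G, with G a norming functional at x, turns a bound on a dual ball
   into a bound on p x. *)
Lemma dominated_ball_bound f0 r M x : p_dominated f0 -> 0 < r -> X x ->
  (forall f, p_dominated f -> (forall u, X u -> Cmod (Cminus (f u) (f0 u)) <= r * p u) ->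
     Cmod (f x) <= M) ->
  r * p x <= 2 * M.
Proof.
  intros Yf0 Hr Xx Hball.
  destruct (norming_functional x Xx) as (G & Glin & Gb & Gx).
  destruct Yf0 as [f0lin (c0 & Hc0 & Hb0)].
  set (hh := fun u => Cplus (f0 u) (Cmult (RtoC r) (G u))).
  assert (Yh : p_dominated hh).
  { split; [split|].
    - intros a b Xa Xb. unfold hh. rewrite (proj1 f0lin), (proj1 Glin); auto. ring.
    - intros c a Xa. unfold hh. rewrite (proj2 f0lin), (proj2 Glin); auto. ring.
    - exists (c0 + r). split; [lra|]. intros u Xu. unfold hh.
      eapply Rle_trans; [apply Cmod_triangle|].
      rewrite Cmod_mult, Cmod_RtoC_nonneg by lra.
      pose proof (Hb0 u Xu). pose proof (Gb u Xu). pose proof (p_nonneg u Xu). nra. }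
  assert (Ch : Cmod (Cplus (f0 x) (Cmult (RtoC r) (RtoC (p x)))) <= M).
  { rewrite <- Gx. apply (Hball hh Yh). intros u Xu. unfold hh.
    replace (Cminus (Cplus (f0 u) (Cmult (RtoC r) (G u))) (f0 u)) with (Cmult (RtoC r) (G u)) by ring.
    rewrite Cmod_mult, Cmod_RtoC_nonneg by lra. apply Rmult_le_compat_l; [lra|auto]. }
  assert (Cf0 : Cmod (f0 x) <= M).
  { apply Hball; [split; eauto|]. intros u Xu.
    replace (Cminus (f0 u) (f0 u)) with (RtoC 0) by ring. rewrite Cmod_0.
    pose proof (p_nonneg u Xu). nra. }
  pose proof (Cmod_le_minus (Cmult (RtoC r) (RtoC (p x))) (Cplus (f0 x) (Cmult (RtoC r) (RtoC (p x))))).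
  replace (Cminus (Cmult (RtoC r) (RtoC (p x))) (Cplus (f0 x) (Cmult (RtoC r) (RtoC (p x)))))
    with (Copp (f0 x)) in H by ring.
  rewrite Cmod_opp, Cmod_mult, !Cmod_RtoC_nonneg in H by (try lra; apply p_nonneg, Xx).
  lra.
Qed.

Theorem weakly_bounded_bounded (v : nat -> cseq) : (forall n, X (v n)) ->
  (forall f, p_dominated f -> exists M, forall n, Cmod (f (v n)) <= M) ->
  exists M, forall n, p (v n) <= M.
Proof.
  intros Xv Hw.
  set (Cs := fun (m : nat) (f : cseq -> C) => forall n, Cmod (f (v n)) <= INR m).
  destruct (baire (cseq -> C) p_dominated dual_ball) with (Cs := Cs)
    as (m & f0 & K & r & Hr & Yf0 & Hball); unfold dual_ball in *.
  - intros j a b r _ _ H u Xu. rewrite Cmod_minus_sym. auto.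
  - intros j a b c r s _ _ _ H1 H2 u Xu. eapply Rle_trans; [apply (Cmod_minus_triangle _ (b u))|].
    specialize (H1 u Xu). specialize (H2 u Xu). lra.
  - intros j a _ u Xu. replace (Cminus (a u) (a u)) with (RtoC 0) by ring.
    rewrite Cmod_0. pose proof (p_nonneg u Xu). nra.
  - intros j a b r s _ _ Hrs H u Xu. specialize (H u Xu). pose proof (p_nonneg u Xu). nra.
  - apply p_dominated_complete.
  - exists (fun _ => RtoC 0). split; [split; intros; ring|].
    exists 0. split; [lra|]. intros u Xu. rewrite Cmod_0. lra.
  - intros m u f Yu Cu Yf Hconv n.
    apply (Ccv_Cmod_le (fun l => u l (v n))); [apply dual_ball_pointwise; auto|]. intros l; apply Cu.
  - intros f Yf. destruct (Hw f Yf) as [M HM]. destruct (INR_unbounded M) as [m Hm].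
    exists m. intros n. specialize (HM n). lra.
  - exists (2 * INR m / r). intros n.
    assert (H : r * p (v n) <= 2 * INR m).
    { apply (dominated_ball_bound f0 r (INR m) (v n)); auto.
      intros f Yf Hf. apply (Hball f Yf). intros j _. exact Hf. }
    apply Rmult_le_reg_l with r; auto.
    replace (r * (2 * INR m / r)) with (2 * INR m) by (field; lra). lra.
Qed.

End WeaklyBounded.

Lemma phi_subspace : is_subspace in_phi.
Proof.
  split; [|split].
  - exists 0%nat. intros; reflexivity.
  - intros a b [N1 H1] [N2 H2]. exists (max N1 N2). intros j Hj. unfold sadd.
    rewrite H1, H2 by lia. ring.
  - intros c a [N H]. exists N. intros j Hj. unfold sscal. rewrite H by lia. ring.
Qed.

Section Closure.
Variables (X : cseq -> Prop) (sn : nat -> cseq -> R).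
Hypothesis HFK : is_FK X sn.
Hypothesis Hphi : forall x, in_phi x -> X x.

Let XS := FK_subspace X sn HFK.

Lemma seq_conv_const x : seq_conv sn (fun _ => x) x.
Proof.
  intros k eps He. exists 0%nat. intros n _. unfold R_dist.
  rewrite (sn_self X sn HFK), Rminus_0_r, Rabs_R0. auto.
Qed.

Lemma seq_conv_squeeze (u : nat -> cseq) x (b : nat -> nat -> R) : (forall n, X (u n)) -> X x ->
  (forall k n, sn k (ssub (u n) x) <= b k n) -> (forall k, Un_cv (b k) 0) -> seq_conv sn u x.
Proof.
  intros Xu Xx Hb Hc k. apply Un_cv_squeeze0 with (b k); auto. intros n. split; auto.
  apply (sn_sub_nonneg X sn HFK); auto.
Qed.

Lemma seq_conv_add (u w : nat -> cseq) a b : (forall n, X (u n)) -> (forall n, X (w n)) -> X a -> X b ->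
  seq_conv sn u a -> seq_conv sn w b -> seq_conv sn (fun n => sadd (u n) (w n)) (sadd a b).
Proof.
  intros Xu Xw Xa Xb Hu Hw.
  apply seq_conv_squeeze with (fun k n => sn k (ssub (u n) a) + sn k (ssub (w n) b)).
  - intros n. apply subspace_add; auto.
  - apply subspace_add; auto.
  - intros k n. replace (ssub (sadd (u n) (w n)) (sadd a b)) with (sadd (ssub (u n) a) (ssub (w n) b))
      by (cseq_ring; ring).
    apply (seminorm_triangle X _ (FK_seminorm X sn HFK k)); apply subspace_sub; auto.
  - intros k. apply Un_cv_plus0; auto.
Qed.

Lemma seq_conv_scal (u : nat -> cseq) c a : (forall n, X (u n)) -> X a ->
  seq_conv sn u a -> seq_conv sn (fun n => sscal c (u n)) (sscal c a).
Proof.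
  intros Xu Xa Hu.
  apply seq_conv_squeeze with (fun k n => sn k (ssub (u n) a) * Cmod c).
  - intros n. apply subspace_scal; auto.
  - apply subspace_scal; auto.
  - intros k n. replace (ssub (sscal c (u n)) (sscal c a)) with (sscal c (ssub (u n) a))
      by (cseq_ring; ring).
    rewrite (seminorm_scal X _ (FK_seminorm X sn HFK k)) by (apply subspace_sub; auto). lra.
  - intros k. apply Un_cv_scal0. auto.
Qed.

Lemma phi_closure_phi v : in_phi v -> phi_closure X sn v.
Proof. intros Hv. split; auto. exists (fun _ => v). split; auto. apply seq_conv_const. Qed.

Lemma phi_closure_subspace : is_subspace (phi_closure X sn).
Proof.
  split; [|split].
  - apply phi_closure_phi, phi_subspace.
  - intros a b [Xa [ua [Pa Ca]]] [Xb [ub [Pb Cb]]]. split; [apply subspace_add; auto|].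
    exists (fun n => sadd (ua n) (ub n)). split; [intros; apply subspace_add; auto; apply phi_subspace|].
    apply seq_conv_add; auto.
  - intros c a [Xa [ua [Pa Ca]]]. split; [apply subspace_scal; auto|].
    exists (fun n => sscal c (ua n)). split; [intros; apply subspace_scal; auto; apply phi_subspace|].
    apply seq_conv_scal; auto.
Qed.

Lemma phi_closure_approx y K eps : phi_closure X sn y -> 0 < eps ->
  exists a, in_phi a /\ forall j, (j <= K)%nat -> sn j (ssub a y) < eps.
Proof.
  intros [Xy [v [Pv Cv]]] He.
  assert (Hfin : forall M, exists N, forall j n, (j <= M)%nat -> (N <= n)%nat -> sn j (ssub (v n) y) < eps).
  { induction M as [|M [N1 HN1]].
    - destruct (seq_conv_sn_lt X sn HFK v y 0 eps (fun n => Hphi _ (Pv n)) Xy Cv He) as [N HN].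
      exists N. intros j n Hj Hn. replace j with 0%nat by lia. auto.
    - destruct (seq_conv_sn_lt X sn HFK v y (S M) eps (fun n => Hphi _ (Pv n)) Xy Cv He) as [N2 HN2].
      exists (max N1 N2). intros j n Hj Hn.
      destruct (Nat.eq_dec j (S M)) as [->|ne]; [apply HN2; lia | apply HN1; lia]. }
  destruct (Hfin K) as [N HN]. exists (v N). split; [apply Pv|]. intros j Hj. apply HN; auto.
Qed.

Lemma phi_closure_complete (u : nat -> cseq) : (forall n, phi_closure X sn (u n)) ->
  (forall k eps, 0 < eps -> exists N : nat, forall m n, (N <= m)%nat -> (N <= n)%nat ->
     sn k (ssub (u m) (u n)) < eps) ->
  exists x, phi_closure X sn x /\ seq_conv sn u x.
Proof.
  intros Hu Hc. assert (Xu : forall n, X (u n)) by (intros n; apply Hu).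
  destruct (FK_complete X sn HFK u Xu Hc) as [x [Xx Cx]].
  exists x. split; auto. split; auto.
  assert (Ha : forall m, exists a, in_phi a /\ forall j, (j <= m)%nat -> sn j (ssub a (u m)) < / INR (S m))
    by (intros m; apply phi_closure_approx; auto; apply inv_INR_S_pos).
  destruct (choice _ Ha) as [a Hav].
  exists a. split; [intros; apply Hav|].
  intros k eps He.
  destruct (inv_INR_S_eventually_le (eps / 2) ltac:(lra)) as [M1 HM1].
  destruct (seq_conv_sn_lt X sn HFK u x k (eps / 2) Xu Xx Cx ltac:(lra)) as [M2 HM2].
  exists (max k (max M1 M2)). intros n Hn. unfold R_dist. rewrite Rminus_0_r.
  assert (Xan : X (a n)) by (apply Hphi, Hav).
  rewrite Rabs_right by (apply Rle_ge, (sn_sub_nonneg X sn HFK); auto).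
  eapply Rle_lt_trans; [apply (sn_sub_triangle X sn HFK k (a n) (u n) x); auto|].
  destruct (Hav n) as [_ H1]. specialize (H1 k ltac:(lia)). specialize (HM1 n ltac:(lia)).
  specialize (HM2 n ltac:(lia)). lra.
Qed.

Lemma phi_closure_FK : is_FK (phi_closure X sn) sn.
Proof.
  pose proof phi_closure_subspace as (H0 & Hadd & Hscal).
  assert (YX : forall y, phi_closure X sn y -> X y) by (intros y [Hy _]; auto).
  split; [|split; [|split; [|split; [|split; [|split; [|split]]]]]]; auto.
  - intros k x Hx. apply (sn_nonneg X sn HFK); auto.
  - intros k x y Hx Hy. apply (seminorm_triangle X _ (FK_seminorm X sn HFK k)); auto.
  - intros k c x Hx. apply (seminorm_scal X _ (FK_seminorm X sn HFK k)); auto.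
  - apply phi_closure_complete.
  - intros u x Hu Hx. apply (FK_coord X sn HFK); auto.
Qed.

End Closure.

Lemma seminorm_scale (X : cseq -> Prop) (rho : cseq -> R) c : 0 <= c ->
  is_seminorm X rho -> is_seminorm X (fun u => c * rho u).
Proof.
  intros Hc [Htri Hhom]. split.
  - intros x y Hx Hy. pose proof (Htri x y Hx Hy). nra.
  - intros d x Hx. rewrite Hhom by auto. ring.
Qed.

Section Main.
Variables (X : cseq -> Prop) (sn : nat -> cseq -> R) (p q : nat -> nat).
Hypothesis HFK : is_FK X sn.
Hypothesis Hphi : forall x, in_phi x -> X x.

Let XS := FK_subspace X sn HFK.
Let T := mean_section p q.

Lemma mean_section_seminorm k n : is_seminorm X (fun a => sn k (T n a)).
Proof.
  split.
  - intros a b Ha Hb. unfold T. rewrite mean_section_sadd.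
    apply (seminorm_triangle X _ (FK_seminorm X sn HFK k)); apply (phi_incl_mean_section X p q); auto.
  - intros c a Ha. unfold T. rewrite mean_section_sscal.
    apply (seminorm_scal X _ (FK_seminorm X sn HFK k)), (phi_incl_mean_section X p q); auto.
Qed.

Lemma mean_section_continuous k n (w : nat -> cseq) : (forall l, X (w l)) ->
  seq_conv sn w szero -> Un_cv (fun l => sn k (T n (w l))) 0.
Proof.
  intros Xw Cw.
  apply Un_cv_squeeze0 with (fun l => rsum (fun j =>
     Cmod (mean_weight p q n j) * (Cmod (w l j) * sn k (delta j))) (q n)).
  - intros l. split; [apply (sn_nonneg X sn HFK), (phi_incl_mean_section X p q); auto|].
    apply (sn_mean_section_le X sn); auto.
  - apply (rsum_cv0 (fun l j => Cmod (mean_weight p q n j) * (Cmod (w l j) * sn k (delta j)))).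
    intros j _.
    apply Un_cv_ext with (fun l => Cmod (w l j) * (Cmod (mean_weight p q n j) * sn k (delta j)));
      [intros l; ring|].
    apply Un_cv_scal0, (FK_coord_cv0 X sn HFK); auto.
Qed.

Lemma FsigmaK_mean_section_bounded : has_FsigmaK X sn p q ->
  forall w k, X w -> exists M, forall n, sn k (T n w) <= M.
Proof.
  intros HF w k Xw.
  apply (weakly_bounded_bounded X XS (sn k) (FK_seminorm X sn HFK k) (fun n => T n w)).
  - intros n. apply (phi_incl_mean_section X p q); auto.
  - intros f [flin (c & Hc & Hb)].
    assert (Hf : in_dual X sn f).
    { apply (sn_upto_dominated_in_dual X sn HFK f k c); auto. intros u Xu.
      eapply Rle_trans; [apply Hb; auto|]. apply Rmult_le_compat_l; auto. apply (sn_upto_ge X sn HFK); auto. }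
    destruct (HF w Xw f Hf) as [l Hl]. apply (Ccv_bounded _ l).
    eapply Ccv_ext; [|exact Hl]. intros n. symmetry. apply (linear_mean_section X sn); auto.
Qed.

Lemma FsigmaK_mean_section_equicontinuous : has_FsigmaK X sn p q ->
  forall k, exists K Cst, 0 <= Cst /\ forall n a, X a -> sn k (T n a) <= Cst * sn_upto sn K a.
Proof.
  intros HF k.
  apply (uniform_boundedness X sn HFK nat (fun n a => sn k (T n a))).
  - intros n. apply mean_section_seminorm.
  - intros n w Xw Cw. apply mean_section_continuous; auto.
  - intros a Xa. apply FsigmaK_mean_section_bounded; auto.
Qed.

Lemma equicontinuous_cv_closure :
  (forall k, exists K Cst, 0 <= Cst /\ forall n a, X a -> sn k (T n a) <= Cst * sn_upto sn K a) ->
  (forall v, in_phi v -> seq_conv sn (fun n => T n v) v) ->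
  forall x, phi_closure X sn x -> seq_conv sn (fun n => T n x) x.
Proof.
  intros Heq Hcv x [Xx [v [Pv Cv]]] k eps He.
  destruct (Heq k) as (K & Cst & HC & HB).
  assert (Xv : forall l, X (v l)) by (intros; apply Hphi, Pv).
  assert (XT : forall n a, X (T n a)) by (intros; apply (phi_incl_mean_section X p q); auto).
  destruct (Un_cv_nonneg_lt _ (fun l => seminorm_nonneg X XS _ (sn_upto_seminorm X sn HFK K) _
       (subspace_sub X XS _ _ (Xv l) Xx)) (seq_conv_sn_upto sn v x K Cv)
       (eps / (3 * (Cst + 1))) ltac:(apply Rdiv_lt_0_compat; lra)) as [N1 HN1].
  destruct (seq_conv_sn_lt X sn HFK v x k (eps / 3) Xv Xx Cv ltac:(lra)) as [N2 HN2].
  set (l := max N1 N2).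
  specialize (HN1 l ltac:(unfold l; lia)). specialize (HN2 l ltac:(unfold l; lia)).
  destruct (seq_conv_sn_lt X sn HFK (fun n => T n (v l)) (v l) k (eps / 3) (fun n => XT n (v l)) (Xv l)
       (Hcv (v l) (Pv l)) ltac:(lra)) as [N3 HN3].
  exists N3. intros n Hn. specialize (HN3 n Hn).
  unfold R_dist. rewrite Rminus_0_r, Rabs_right by (apply Rle_ge, (sn_sub_nonneg X sn HFK); auto).
  assert (Hdiff : sn k (ssub (T n x) (T n (v l))) <= eps / 3).
  { unfold T. rewrite <- mean_section_ssub. fold T.
    eapply Rle_trans; [apply HB, subspace_sub; auto|].
    rewrite (seminorm_sub_sym X XS _ (sn_upto_seminorm X sn HFK K)) by auto.
    apply Rlt_le. rewrite Rmult_comm. replace (eps / 3) with ((Cst + 1) * (eps / (3 * (Cst + 1))))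
      by (field; lra).
    pose proof (seminorm_nonneg X XS _ (sn_upto_seminorm X sn HFK K) (ssub (v l) x)
                  (subspace_sub X XS _ _ (Xv l) Xx)). nra. }
  eapply Rle_lt_trans; [apply (sn_sub_triangle X sn HFK k _ (T n (v l))); auto|].
  eapply Rle_lt_trans; [apply Rplus_le_compat_l, (sn_sub_triangle X sn HFK k _ (v l)); auto|].
  lra.
Qed.

Definition weighted_mean (z : cseq) (n : nat) (u : cseq) : C :=
  csum (fun j => Cmult (mean_weight p q n j) (Cmult (z j) (u j))) (q n).

Lemma weighted_mean_linear Y z n : linear_on Y (weighted_mean z n).
Proof.
  split; intros; unfold weighted_mean.
  - rewrite <- csum_plus. apply csum_ext. intros; unfold sadd; ring.
  - rewrite <- csum_scal. apply csum_ext. intros; unfold sscal; ring.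
Qed.

Lemma weighted_mean_delta z n j :
  weighted_mean z n (delta j) = Cmult (mean_weight p q n j) (z j).
Proof.
  unfold weighted_mean.
  rewrite (csum_ext _ (fun i => Cmult (Cmult (mean_weight p q n i) (z i)) (delta i j)))
    by (intros; rewrite delta_sym; ring).
  rewrite csum_delta. destruct (Nat.ltb_spec j (q n)); [auto|].
  rewrite mean_weight_beyond by lia. ring.
Qed.

Hypothesis Hpq : forall n, (p n < q n)%nat.
Hypothesis Hq : forall M : nat, exists N : nat, forall n, (N <= n)%nat -> (M <= q n)%nat.

Lemma dual_d_closure_limit z : dual_d p q (phi_closure X sn) z ->
  exists G K Cst, 0 <= Cst /\ linear_on (phi_closure X sn) G /\
    (forall u, phi_closure X sn u -> Cmod (G u) <= Cst * sn_upto sn K u) /\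
    (forall j, G (delta j) = z j).
Proof.
  intros Hz. set (Y := phi_closure X sn).
  assert (HY : is_FK Y sn) by apply (phi_closure_FK X sn HFK Hphi).
  assert (Hg : forall u, exists l, Y u -> Ccv (fun n => weighted_mean z n u) l).
  { intros u. destruct (classic (Y u)) as [Hu|Hu]; [|exists (RtoC 0); tauto].
    destruct (Hz u Hu) as [l Hl]. exists l. intros _. eapply Ccv_ext; [|exact Hl].
    intros n. apply pqmean_partial_sums. }
  destruct (choice _ Hg) as [G HG].
  destruct (uniform_boundedness Y sn HY nat (fun n u => Cmod (weighted_mean z n u)))
    as (K & Cst & HC & HB).
  - intros n. apply linear_Cmod_seminorm, weighted_mean_linear.
  - intros n w Yw Cw.
    apply Un_cv_squeeze0 with (fun l => rsum (fun j =>
       Cmod (w l j) * (Cmod (mean_weight p q n j) * Cmod (z j))) (q n)).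
    + intros l. split; [apply Cmod_ge_0|]. unfold weighted_mean.
      eapply Rle_trans; [apply Cmod_csum_le|].
      apply rsum_le. intros j _. rewrite !Cmod_mult. right; ring.
    + apply (rsum_cv0 (fun l j => Cmod (w l j) * (Cmod (mean_weight p q n j) * Cmod (z j)))).
      intros j _. apply Un_cv_scal0, (FK_coord_cv0 Y sn HY); auto.
  - intros a Ya. destruct (Ccv_bounded _ _ (HG a Ya)) as [M HM]. exists M. auto.
  - exists G, K, Cst. split; [|split; [|split]]; auto.
    + apply (linear_on_limit Y (weighted_mean z)); auto.
      * apply (FK_subspace Y sn HY).
      * intros; apply weighted_mean_linear.
    + intros u Hu. apply (Ccv_Cmod_le (fun n => weighted_mean z n u)); auto.
    + intros j. apply (Ccv_unique (fun n => weighted_mean z n (delta j))).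
      * apply HG, (phi_closure_phi X sn HFK Hphi), phi_delta.
      * apply Ccv_ext with (fun n => Cmult (z j) (mean_weight p q n j));
          [intros n; rewrite weighted_mean_delta; ring|].
        pose proof (Ccv_scal _ _ (z j) (mean_weight_cv p q Hpq Hq j)) as H.
        replace (Cmult (z j) (RtoC 1)) with (z j) in H by ring. exact H.
Qed.

Lemma dual_d_closure_coefficients z : dual_d p q (phi_closure X sn) z ->
  exists f, in_dual X sn f /\ forall j, f (delta j) = z j.
Proof.
  intros Hz. destruct (dual_d_closure_limit z Hz) as (G & K & Cst & HC & Glin & Gb & Gd).
  destruct (complex_hahn_banach X (fun u => Cst * sn_upto sn K u) (phi_closure X sn) G)
    as (f & flin & fext & fb); auto.
  - apply seminorm_scale, sn_upto_seminorm; auto.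
  - apply phi_closure_subspace; auto.
  - intros u [Xu _]. auto.
  - exists f. split.
    + apply (sn_upto_dominated_in_dual X sn HFK f K Cst); auto.
    + intros j. rewrite fext; auto. apply (phi_closure_phi X sn HFK Hphi), phi_delta.
Qed.

Lemma FsigmaK_closure_sigmaK : has_FsigmaK X sn p q -> has_sigmaK sn p q (phi_closure X sn).
Proof.
  intros HF x Hx. apply (equicontinuous_cv_closure
    (FsigmaK_mean_section_equicontinuous HF) (mean_section_cv_phi X sn p q HFK Hphi Hpq Hq) x Hx).
Qed.

Lemma FsigmaK_sub_dd : has_FsigmaK X sn p q ->
  forall x, X x -> dual_d p q (dual_d p q (phi_closure X sn)) x.
Proof.
  intros HF x Xx z Hz. destruct (dual_d_closure_coefficients z Hz) as [f [Hf Hfd]].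
  destruct (HF x Xx f Hf) as [l Hl]. exists l.
  replace (fun j => Cmult (x j) (z j)) with (fun j => Cmult (x j) (f (delta j)))
    by (extensionality j; rewrite Hfd; auto).
  exact Hl.
Qed.

Lemma sigmaK_dd_FsigmaK : has_sigmaK sn p q (phi_closure X sn) ->
  (forall x, X x -> dual_d p q (dual_d p q (phi_closure X sn)) x) -> has_FsigmaK X sn p q.
Proof.
  intros Hs Hdd x Xx f [flin [fscal fcont]].
  apply (Hdd x Xx (fun j => f (delta j))). intros y Hy. exists (f y).
  eapply Ccv_ext; [|apply (fcont (fun n => T n y) y); auto].
  - intros n. unfold T. rewrite (linear_mean_section X sn p q HFK Hphi); [|split; auto].
    f_equal. extensionality k. apply csum_ext. intros; ring.
  - intros n. apply (phi_incl_mean_section X p q Hphi).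
  - apply Hy.
  - apply Hs, Hy.
Qed.

End Main.

Theorem mainTheorem14 (X : cseq -> Prop) (sn : nat -> cseq -> R) (p q : nat -> nat) :
  is_FK X sn ->
  (forall x, in_phi x -> X x) ->
  (forall n, (p n < q n)%nat) ->
  (forall M : nat, exists N : nat, forall n, (N <= n)%nat -> (M <= q n)%nat) ->
  (has_FsigmaK X sn p q <->
   (has_sigmaK sn p q (phi_closure X sn) /\
    forall x, X x -> dual_d p q (dual_d p q (phi_closure X sn)) x)).
Proof.
  intros HFK Hphi Hpq Hq. split.
  - intros HF. split.
    + apply FsigmaK_closure_sigmaK; auto.
    + apply FsigmaK_sub_dd; auto.
  - intros [Hs Hdd]. apply sigmaK_dd_FsigmaK; auto.
Qed.
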